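(* Let $\delta=\delta(q)$ be a function taking values in $(0,1/2)$ such that $\frac{1}{\delta(q)}\cdot\frac{\log\log\log q}{\log\log q}\to 0$ as $q\to\infty$. Then there are absolute constants $c_0 \geq 1$ and $C>0$ such that for every sufficiently large prime $q$, the number of integers $1\le n<q$ that can be written as $n=mk$ with positive integers $m\le q^{\delta/10}$ and $k$ such that every prime $p\mid k$ satisfies $q^{\delta/10}<p\le q^{\delta}$ is at least $C\,\rho(1/\delta)\, c_0^{-1/\delta}\, q$.
   Context: $\rho$ is the Dickman–de Bruijn function: the unique continuous solution of $u\rho'(u)+\rho(u-1)=0$ for $u>1$ with $\rho(u)=1$ on $[0,1]$. *)

From Stdlib Require Import Reals Lra Lia ZArith Znumtheory List ClassicalEpsilon.
Open Scope R_scope.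

Definition is_dickman (rho : R -> R) : Prop :=
  (forall u, 0 <= u <= 1 -> rho u = 1) /\
  (forall u, 0 < u -> continuity_pt rho u) /\
  (forall u, 1 < u -> derivable_pt_lim rho u (- rho (u - 1) / u)).

Definition good (q : nat) (d : R) (n : nat) : Prop :=
  exists m k : nat, (1 <= m)%nat /\ (1 <= k)%nat /\ n = (m * k)%nat /\
    INR m <= Rpower (INR q) (d / 10) /\
    (forall p : nat, prime (Z.of_nat p) -> Nat.divide p k ->
       Rpower (INR q) (d / 10) < INR p <= Rpower (INR q) d).

Definition dec_prop (P : Prop) : bool :=
  if excluded_middle_informative P then true else false.

Definition count_good (q : nat) (d : R) : nat :=
  length (filter (fun n => dec_prop (good q d n)) (seq 1 (q - 1))).

From Stdlib Require Import Reals Lra Lia ZArith Znumtheory.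
From Coquelicot Require Import Coquelicot.
Open Scope R_scope.

(* Put [u = 1 / delta] and [L = delta ln q]. Choose [j ~ u] intervals of equal logarithmic
   width [w L] stacked downwards inside (q^(delta/10), q^delta], so that every product [k]
   of one prime from each interval lies in [q^(1 - delta/10), q/4]. The numbers [m k] with
   [m <= (q-1)/k] are then good and pairwise distinct ([m < q^(delta/10)] is coprime to [k]),
   so there are at least [(q/2) sum 1/k = (q/2) prod_i sum_(p in I_i) 1/p >= (q/4) (w/4)^j]
   of them, by Chebyshev's bound and a weak Mertens estimate. Finally
   [(w/4)^j >= exp (- u ln u - u ln ln u - O(u))], while [u rho u = int_(u-1)^u rho]
   bootstraps to [rho u <= exp (- u ln u - u ln ln u + O(u))]. The growth condition on
   [delta] only serves to make [ln q >= 2880 u^3]. *)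

Lemma INR_unbounded (x : R) : exists n : nat, x < INR n.
Proof. destruct (INR_archimed 1 x Rlt_0_1) as [n Hn]. exists n. lra. Qed.

Lemma exp_le (x y : R) : x <= y -> exp x <= exp y.
Proof. intros [H|H]; [left; apply exp_increasing; exact H | subst; lra]. Qed.

Lemma one_le_exp (x : R) : 0 <= x -> 1 <= exp x.
Proof. intro. pose proof (exp_ineq1_le x). lra. Qed.

Lemma exp_pow_INR (x : R) (n : nat) : exp x ^ n = exp (INR n * x).
Proof.
  induction n as [|n IH]; [simpl; rewrite Rmult_0_l, exp_0; reflexivity|].
  rewrite S_INR. simpl pow. rewrite IH, <- exp_plus. f_equal. ring.
Qed.

Lemma ln_le_sub1 (x : R) : 0 < x -> ln x <= x - 1.
Proof.
  intro Hx. rewrite <- (ln_exp (x - 1)). apply ln_le; [exact Hx|].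
  pose proof (exp_ineq1_le (x - 1)). lra.
Qed.

Lemma ln_ge_of_exp_le (a t : R) : exp a <= t -> a <= ln t.
Proof. intro H. rewrite <- (ln_exp a). apply ln_le; [apply exp_pos | exact H]. Qed.

Lemma ln_add_le (a r : R) : 0 < a -> 0 <= r -> ln (a + r) <= ln a + r / a.
Proof.
  intros Ha Hr. assert (0 <= r / a) by (apply Rdiv_le_0_compat; lra).
  replace (a + r) with (a * (1 + r / a)) by (field; lra).
  rewrite ln_mult by lra. pose proof (ln_le_sub1 (1 + r / a)). lra.
Qed.

Lemma pow_le_pow_of_le1 (b : R) (m n : nat) : 0 <= b <= 1 -> (m <= n)%nat -> b ^ n <= b ^ m.
Proof.
  intros Hb Hmn. induction Hmn as [|n _ IH]; [lra|]. simpl.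
  pose proof (pow_le b n (proj1 Hb)). nra.
Qed.

Definition nat_floor (x : R) : nat := Z.to_nat (Int_part x).

Lemma nat_floor_spec (x : R) : 0 <= x -> INR (nat_floor x) <= x < INR (nat_floor x) + 1.
Proof.
  intro Hx. destruct (base_Int_part x) as [H1 H2].
  assert (Hz : (0 <= Int_part x)%Z) by (assert (-1 < Int_part x)%Z by (apply lt_IZR; lra); lia).
  unfold nat_floor. rewrite INR_IZR_INZ, Z2Nat.id by exact Hz. lra.
Qed.

Fixpoint sumR (f : nat -> R) (n : nat) : R :=
  match n with O => 0 | S k => sumR f k + f k end.

Lemma sumR_le (f g : nat -> R) (n : nat) :
  (forall i, (i < n)%nat -> f i <= g i) -> sumR f n <= sumR g n.
Proof.
  induction n as [|n IH]; intros Hfg; simpl; [lra|].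
  apply Rplus_le_compat; [apply IH; intros; apply Hfg | apply Hfg]; lia.
Qed.

Lemma sumR_scal (c : R) (f : nat -> R) (n : nat) : sumR (fun i => c * f i) n = c * sumR f n.
Proof. induction n; simpl; [|rewrite IHn]; ring. Qed.

Lemma sumR_ext (f g : nat -> R) (n : nat) :
  (forall i, (i < n)%nat -> f i = g i) -> sumR f n = sumR g n.
Proof.
  induction n as [|n IH]; intros Hfg; simpl; [reflexivity|].
  rewrite Hfg by lia. rewrite IH; [reflexivity|]. intros i Hi. apply Hfg. lia.
Qed.

Lemma sumR_geometric (r : R) (N : nat) :
  (r - 1) * sumR (fun i => r ^ (N - i)) N = r ^ S N - r.
Proof.
  induction N as [|N IH]; [simpl; ring|].
  change (sumR (fun i => r ^ (S N - i)) (S N))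
    with (sumR (fun i => r ^ (S N - i)) N + r ^ (S N - N)).
  rewrite (sumR_ext _ (fun i => r * r ^ (N - i))), sumR_scal.
  - replace (S N - N)%nat with 1%nat by lia.
    replace ((r - 1) * (r * sumR (fun i => r ^ (N - i)) N + r ^ 1))
      with (r * ((r - 1) * sumR (fun i => r ^ (N - i)) N) + (r - 1) * r) by (simpl; ring).
    rewrite IH. simpl. ring.
  - intros i Hi. replace (S N - i)%nat with (S (N - i)) by lia. reflexivity.
Qed.

(** * The Dickman function *)

Section Dickman.

Variable rho : R -> R.
Hypothesis Hrho : is_dickman rho.

(* [rho] is only specified on [0, oo); freezing it at [rho 0] on the left gives a
   function continuous everywhere, so that its primitive is differentiable at 0. *)
Definition rho_ext (x : R) : R := rho (Rmax 0 x).

Lemma rho_ext_nonneg_arg (x : R) : 0 <= x -> rho_ext x = rho x.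
Proof. intro. unfold rho_ext. rewrite Rmax_right; auto. Qed.

Lemma rho_ext_continuous (x : R) : continuous rho_ext x.
Proof.
  destruct Hrho as [H1 [H2 _]]. destruct (Rlt_or_le x 1) as [Hx|Hx].
  - apply continuous_ext_loc with (fun _ => 1); [|apply continuous_const].
    assert (Hb : 0 < 1 - x) by lra. exists (mkposreal _ Hb). intros y Hy.
    apply Rabs_lt_between' in Hy. simpl in Hy.
    unfold rho_ext. rewrite H1; auto. split; [apply Rmax_l | apply Rmax_lub; lra].
  - apply continuous_ext_loc with rho.
    + assert (Hb : 0 < x) by lra. exists (mkposreal _ Hb). intros y Hy.
      apply Rabs_lt_between' in Hy. simpl in Hy.
      unfold rho_ext. rewrite Rmax_right; lra.
    + apply continuity_pt_filterlim, H2. lra.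
Qed.

Definition rho_primitive (x : R) : R := RInt rho_ext 0 x.

Lemma rho_primitive_derive (x : R) : is_derive rho_primitive x (rho_ext x).
Proof.
  apply is_derive_RInt with 0; [|apply rho_ext_continuous].
  apply filter_forall. intro b. apply (RInt_correct (V := R_CompleteNormedModule)).
  apply ex_RInt_continuous.
  intros; apply rho_ext_continuous.
Qed.

Lemma rho_primitive_continuous (x : R) : continuity_pt rho_primitive x.
Proof.
  apply derivable_continuous_pt. exists (rho_ext x).
  apply is_derive_Reals, rho_primitive_derive.
Qed.

Lemma rho_primitive_mvt (a b : R) : a <= b ->
  exists c, a <= c <= b /\ rho_primitive b - rho_primitive a = rho_ext c * (b - a).
Proof.
  intro Hab. destruct (MVT_gen rho_primitive a b rho_ext) as [c [Hc He]].
  - intros; apply rho_primitive_derive.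
  - intros; apply rho_primitive_continuous.
  - rewrite Rmin_left, Rmax_right in Hc by exact Hab. exists c; auto.
Qed.

Lemma rho_primitive_0 : rho_primitive 0 = 0.
Proof. unfold rho_primitive. rewrite RInt_point. reflexivity. Qed.

Lemma rho_primitive_1 : rho_primitive 1 = 1.
Proof.
  destruct Hrho as [H1 _]. unfold rho_primitive. rewrite (RInt_ext _ (fun _ => 1)).
  - rewrite RInt_const. unfold scal; simpl. unfold mult; simpl. lra.
  - intros x Hx. rewrite Rmin_left, Rmax_right in Hx by lra.
    rewrite rho_ext_nonneg_arg by lra. apply H1; lra.
Qed.

(* The delay equation integrates to [u rho u = int_(u-1)^u rho]: both sides have
   derivative [rho u - rho (u - 1)] on [1, oo) and agree at [u = 1]. *)
Lemma dickman_integral_eq (u : R) : 1 <= u ->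
  u * rho u = rho_primitive u - rho_primitive (u - 1).
Proof.
  intro Hu. destruct Hrho as [H1 [H2 H3]].
  set (G := fun u => u * rho u - rho_primitive u + rho_primitive (u - 1)).
  destruct (MVT_gen G 1 u (fun _ => 0)) as [c [_ He]].
  - intros x Hx. rewrite Rmin_left, Rmax_right in Hx by lra. apply is_derive_Reals.
    replace 0 with ((1 * rho x + x * (- rho (x - 1) / x)) - rho_ext x
                    + rho_ext (x - 1) * (1 - 0))
      by (rewrite !rho_ext_nonneg_arg by lra; field; lra).
    apply (derivable_pt_lim_plus (fun u => u * rho u - rho_primitive u)
             (fun u => rho_primitive (u - 1))).
    + apply (derivable_pt_lim_minus (fun u => u * rho u) rho_primitive).
      * apply (derivable_pt_lim_mult id rho); [apply derivable_pt_lim_id | apply H3; lra].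
      * apply is_derive_Reals, rho_primitive_derive.
    + apply (derivable_pt_lim_comp (fun u => u - 1) rho_primitive).
      * apply (derivable_pt_lim_minus id (fun _ => 1));
          [apply derivable_pt_lim_id | apply derivable_pt_lim_const].
      * apply is_derive_Reals, rho_primitive_derive.
  - intros x Hx. rewrite Rmin_left, Rmax_right in Hx by lra.
    apply (continuity_pt_plus (fun u => u * rho u - rho_primitive u)
             (fun u => rho_primitive (u - 1))).
    + apply (continuity_pt_minus (fun u => u * rho u) rho_primitive);
        [|apply rho_primitive_continuous].
      apply (continuity_pt_mult id rho);
        [apply derivable_continuous_pt, derivable_pt_id | apply H2; lra].
    + apply (continuity_pt_comp (fun u => u - 1) rho_primitive);
        [|apply rho_primitive_continuous].
      apply (continuity_pt_minus id (fun _ => 1));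
        [apply derivable_continuous_pt, derivable_pt_id | apply continuity_pt_const; intros ? ?; auto].
  - unfold G in He. replace (1 - 1) with 0 in He by lra.
    rewrite rho_primitive_0, rho_primitive_1, (H1 1) in He by lra. lra.
Qed.

Lemma dickman_antitone_of_nonneg (a : R) :
  (forall t, 0 <= t <= a -> 0 <= rho t) ->
  forall x y, 0 <= x <= y -> y <= a + 1 -> rho y <= rho x.
Proof.
  intros Hpos x y Hxy Hy. destruct Hrho as [H1 [H2 H3]].
  destruct (Rle_or_lt y 1) as [Hy1|Hy1]; [rewrite !H1; lra|].
  set (x' := Rmax 1 x).
  assert (Hx' : rho x' <= rho x).
  { unfold x'. destruct (Rle_or_lt x 1).
    - rewrite Rmax_left by lra. rewrite !H1; lra.
    - rewrite Rmax_right by lra. lra. }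
  assert (Hx'y : 1 <= x' <= y) by (unfold x'; split; [apply Rmax_l | apply Rmax_lub; lra]).
  destruct (MVT_gen rho x' y (fun c => - rho (c - 1) / c)) as [c [Hc He]].
  - intros z Hz. rewrite Rmin_left, Rmax_right in Hz by lra. apply is_derive_Reals, H3. lra.
  - intros z Hz. rewrite Rmin_left, Rmax_right in Hz by lra. apply H2. lra.
  - rewrite Rmin_left, Rmax_right in Hc by lra.
    assert (0 <= rho (c - 1) / c) by (apply Rdiv_le_0_compat; [apply Hpos|]; lra).
    assert (rho y - rho x' <= 0).
    { rewrite He. unfold Rdiv in *. rewrite <- Ropp_mult_distr_l. nra. }
    lra.
Qed.

(* Monotonicity up to [a + 1] and [x rho x = int_(x-1)^x rho >= rho x] give [rho x >= 0]. *)
Lemma dickman_nonneg_step (a : R) : 0 <= a ->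
  (forall t, 0 <= t <= a -> 0 <= rho t) -> forall t, 0 <= t <= a + 1 -> 0 <= rho t.
Proof.
  intros Ha Hpos x Hx. destruct (Rle_or_lt x 1) as [Hx1|Hx1].
  { destruct Hrho as [H1 _]. rewrite H1; lra. }
  destruct (rho_primitive_mvt (x - 1) x ltac:(lra)) as [c [Hc E]].
  rewrite rho_ext_nonneg_arg in E by lra.
  rewrite <- dickman_integral_eq in E by lra.
  assert (rho x <= rho c) by (apply (dickman_antitone_of_nonneg a Hpos); lra).
  replace (x - (x - 1)) with 1 in E by ring.
  assert (Hprod : 0 <= (x - 1) * rho x) by lra.
  apply Rmult_le_reg_l with (x - 1); lra.
Qed.

Lemma dickman_nonneg (x : R) : 0 <= x -> 0 <= rho x.
Proof.
  intro Hx. destruct (INR_unbounded x) as [n Hn].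
  assert (Hn' : forall t, 0 <= t <= INR n -> 0 <= rho t); [|apply Hn'; lra].
  clear Hn. induction n as [|n IH]; intros t Ht.
  - simpl in Ht. destruct Hrho as [H1 _]. rewrite H1; lra.
  - rewrite S_INR in Ht. exact (dickman_nonneg_step (INR n) (pos_INR n) IH t Ht).
Qed.

Lemma dickman_antitone (x y : R) : 0 <= x <= y -> rho y <= rho x.
Proof.
  intro Hxy. apply (dickman_antitone_of_nonneg y); [|lra|lra].
  intros; apply dickman_nonneg; lra.
Qed.

Lemma dickman_le_1 (x : R) : 0 <= x -> rho x <= 1.
Proof.
  intro Hx. destruct Hrho as [H1 _]. rewrite <- (H1 0) by lra. apply dickman_antitone; lra.
Qed.

Lemma rho_primitive_le_riemann_sum (a : R) (N k : nat) : 0 <= a -> (0 < N)%nat ->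
  rho_primitive (a + INR k / INR N) - rho_primitive a
  <= / INR N * sumR (fun i => rho (a + INR i / INR N)) k.
Proof.
  intros Ha HN. assert (HNp : 0 < INR N) by (apply lt_0_INR; lia).
  induction k as [|k IH].
  - simpl. replace (a + 0 / INR N) with a by (field; lra). lra.
  - simpl sumR. rewrite Rmult_plus_distr_l.
    assert (Hk : 0 <= INR k / INR N) by (apply Rdiv_le_0_compat; [apply pos_INR | lra]).
    assert (Hstep : a + INR (S k) / INR N = a + INR k / INR N + / INR N)
      by (rewrite S_INR; field; lra).
    assert (Hinv : 0 < / INR N) by (apply Rinv_0_lt_compat; lra).
    destruct (rho_primitive_mvt (a + INR k / INR N) (a + INR (S k) / INR N))
      as [c [Hc E]]; [lra|].
    rewrite rho_ext_nonneg_arg in E by lra.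
    assert (rho c <= rho (a + INR k / INR N)) by (apply dickman_antitone; lra).
    rewrite Hstep in E |- *. replace (a + INR k / INR N + / INR N - (a + INR k / INR N))
      with (/ INR N) in E by ring.
    assert (rho c * / INR N <= / INR N * rho (a + INR k / INR N))
      by (rewrite Rmult_comm; apply Rmult_le_compat_l; lra).
    lra.
Qed.

(* Left Riemann sums of the nonincreasing [rho] overestimate [int_(t-1)^t rho = t rho t]. *)
Lemma dickman_le_riemann_sum (t : R) (N : nat) : 1 <= t -> (0 < N)%nat ->
  t * rho t <= / INR N * sumR (fun i => rho (t - 1 + INR i / INR N)) N.
Proof.
  intros Ht HN. rewrite (dickman_integral_eq t Ht).
  pose proof (rho_primitive_le_riemann_sum (t - 1) N N ltac:(lra) HN) as H.
  replace (t - 1 + INR N / INR N) with t in H by (field; apply not_0_INR; lia).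
  exact H.
Qed.

End Dickman.

(* The constant 4 is what makes [exp_one_sub_dickman_g'_le] hold once [ln t >= 4]. *)
Definition dickman_g (t : R) : R := - t * ln t - t * ln (ln t) + 4 * t.
Definition dickman_g' (t : R) : R := - ln t - 1 - ln (ln t) - / ln t + 4.

Lemma dickman_g_derive (t : R) : 1 < t -> derivable_pt_lim dickman_g t (dickman_g' t).
Proof.
  intro Ht. assert (Hl : 0 < ln t) by (rewrite <- ln_1; apply ln_increasing; lra).
  apply is_derive_Reals. unfold dickman_g, dickman_g'. auto_derive.
  - repeat split; lra.
  - field. lra.
Qed.

Lemma five_le_exp4 : 5 <= exp 4.
Proof. pose proof (exp_ineq1_le 4). lra. Qed.

Lemma ln_bounds_of_exp4_le (t : R) : exp 4 <= t -> 4 <= ln t /\ 1 <= ln (ln t).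
Proof.
  intro Ht. assert (H4 : 4 <= ln t) by (apply ln_ge_of_exp_le; exact Ht).
  split; [exact H4|]. apply ln_ge_of_exp_le. pose proof exp_le_3. lra.
Qed.

Lemma dickman_g'_le_m1 (t : R) : exp 4 <= t -> dickman_g' t <= -1.
Proof.
  intro Ht. destruct (ln_bounds_of_exp4_le t Ht) as [H1 H2].
  assert (0 < / ln t) by (apply Rinv_0_lt_compat; lra).
  unfold dickman_g'. lra.
Qed.

Lemma dickman_g'_antitone (s t : R) : exp 4 <= s <= t -> dickman_g' t <= dickman_g' s.
Proof.
  intros Hst. destruct (ln_bounds_of_exp4_le s ltac:(lra)) as [H1 _].
  assert (H2 : ln s <= ln t) by (apply ln_le; pose proof five_le_exp4; lra).
  assert (ln (ln s) <= ln (ln t)) by (apply ln_le; lra).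
  assert (/ ln s - / ln t <= ln t - ln s).
  { replace (/ ln s - / ln t) with ((ln t - ln s) * / (ln s * ln t)) by (field; lra).
    rewrite <- (Rmult_1_r (ln t - ln s)) at 2. apply Rmult_le_compat_l; [lra|].
    rewrite <- Rinv_1. apply Rinv_le_contravar; nra. }
  unfold dickman_g'. lra.
Qed.

Lemma dickman_g_mvt (s t : R) : exp 4 <= s <= t ->
  exists c, s <= c <= t /\ dickman_g t - dickman_g s = dickman_g' c * (t - s).
Proof.
  intros Hst. pose proof five_le_exp4.
  destruct (MVT_gen dickman_g s t dickman_g') as [c [Hc E]].
  - intros x Hx. rewrite Rmin_left, Rmax_right in Hx by lra.
    apply is_derive_Reals, dickman_g_derive. lra.
  - intros x Hx. rewrite Rmin_left, Rmax_right in Hx by lra.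
    apply derivable_continuous_pt. exists (dickman_g' x). apply dickman_g_derive. lra.
  - rewrite Rmin_left, Rmax_right in Hc by lra. exists c; auto.
Qed.

Lemma dickman_g_tangent_le (s t : R) : exp 4 <= s <= t ->
  dickman_g s <= dickman_g t - dickman_g' t * (t - s).
Proof.
  intros Hst. destruct (dickman_g_mvt s t Hst) as [c [Hc E]].
  assert (dickman_g' t <= dickman_g' c) by (apply dickman_g'_antitone; lra).
  assert (dickman_g' t * (t - s) <= dickman_g' c * (t - s)) by (apply Rmult_le_compat_r; lra).
  lra.
Qed.

Lemma dickman_g_antitone (s t : R) : exp 4 <= s <= t -> dickman_g t <= dickman_g s.
Proof.
  intros Hst. destruct (dickman_g_mvt s t Hst) as [c [Hc E]].
  assert (dickman_g' c <= -1) by (apply dickman_g'_le_m1; lra).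
  assert (dickman_g' c * (t - s) <= 0) by (apply Rmult_le_0_r; lra).
  lra.
Qed.

Lemma exp_one_sub_dickman_g'_le (t : R) : exp 4 <= t -> exp (- dickman_g' t + 1) <= t * - dickman_g' t.
Proof.
  intro Ht. destruct (ln_bounds_of_exp4_le t Ht) as [H1 H2]. pose proof (exp_pos 4).
  assert (Hinv : 0 < / ln t <= / 4)
    by (split; [apply Rinv_0_lt_compat | apply Rinv_le_contravar]; lra).
  replace (- dickman_g' t + 1) with (ln t + ln (ln t) + (/ ln t - 2)) by (unfold dickman_g'; ring).
  rewrite !exp_plus, !exp_ln by lra.
  assert (exp (/ ln t - 2) <= / 2).
  { apply Rle_trans with (exp (- (7 / 4))); [apply exp_le; lra|].
    rewrite exp_Ropp. apply Rinv_le_contravar; [lra|]. pose proof (exp_ineq1_le (7 / 4)). lra. }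
  assert (0 < t * ln t) by (apply Rmult_lt_0_compat; lra).
  apply Rle_trans with (t * ln t * / 2); [apply Rmult_le_compat_l; lra|].
  assert (ln t / 2 <= - dickman_g' t) by (unfold dickman_g'; lra).
  nra.
Qed.

Lemma sumR_exp_geometric_lt (D : R) (N : nat) : 0 < D <= INR N ->
  sumR (fun i => exp (D / INR N) ^ (N - i)) N < exp (D + 1) * INR N / D.
Proof.
  intros HD. assert (HN : 0 < INR N) by lra.
  set (r := exp (D / INR N)).
  assert (HDN : 0 < D / INR N <= 1)
    by (split; [apply Rdiv_lt_0_compat | apply Rle_div_l]; lra).
  assert (Hr1 : D / INR N <= r - 1) by (pose proof (exp_ineq1_le (D / INR N)); unfold r; lra).
  assert (HrN : r ^ S N <= exp (D + 1)).
  { unfold r. rewrite exp_pow_INR, S_INR. apply exp_le.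
    replace ((INR N + 1) * (D / INR N)) with (D + D / INR N) by (field; lra). lra. }
  assert (0 < r) by apply exp_pos.
  apply (Rmult_lt_reg_l (r - 1)); [lra|]. rewrite sumR_geometric.
  replace ((r - 1) * (exp (D + 1) * INR N / D)) with (exp (D + 1) * ((r - 1) / (D / INR N)))
    by (field; lra).
  assert (1 <= (r - 1) / (D / INR N)) by (apply Rle_div_r; lra).
  pose proof (exp_pos (D + 1)). nra.
Qed.

Definition dickman_t0 : R := exp 4 + 1.
Definition dickman_majorant (t : R) : R := exp (dickman_g t - dickman_g dickman_t0).

Lemma dickman_majorant_shift_le (t x : R) : dickman_t0 <= t -> 0 <= x <= 1 ->
  dickman_majorant (t - 1 + x) <= dickman_majorant t * exp (- dickman_g' t * (1 - x)).
Proof.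
  unfold dickman_t0. intros Ht Hx. unfold dickman_majorant. rewrite <- exp_plus. apply exp_le.
  pose proof (dickman_g_tangent_le (t - 1 + x) t ltac:(lra)). lra.
Qed.

(* One step of the bootstrap: if [rho <= majorant] on [t - 1, t), then [rho t < majorant t]. *)
Lemma dickman_majorant_riemann_sum_lt (t : R) (N : nat) :
  dickman_t0 <= t -> ln t + ln (ln t) + 1 <= INR N ->
  / INR N * sumR (fun i => dickman_majorant (t - 1 + INR i / INR N)) N
  < t * dickman_majorant t.
Proof.
  intros Ht HN. assert (He4 : exp 4 <= t) by (unfold dickman_t0 in Ht; lra).
  set (D := - dickman_g' t).
  assert (HD1 : 1 <= D) by (pose proof (dickman_g'_le_m1 t He4); unfold D; lra).
  assert (HDN : D <= INR N).
  { destruct (ln_bounds_of_exp4_le t He4). assert (/ ln t <= / 4) by (apply Rinv_le_contravar; lra).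
    unfold D, dickman_g'. lra. }
  assert (HNp : 0 < INR N) by lra.
  assert (Hterm : forall i, (i < N)%nat ->
    dickman_majorant (t - 1 + INR i / INR N)
    <= dickman_majorant t * exp (D / INR N) ^ (N - i)).
  { intros i Hi. assert (HiN : INR i + 1 <= INR N) by (rewrite <- S_INR; apply le_INR; lia).
    assert (0 <= INR i / INR N <= 1)
      by (split; [apply Rdiv_le_0_compat | apply Rle_div_l]; pose proof (pos_INR i); lra).
    rewrite exp_pow_INR, minus_INR by lia.
    replace ((INR N - INR i) * (D / INR N)) with (- dickman_g' t * (1 - INR i / INR N))
      by (unfold D; field; lra).
    apply dickman_majorant_shift_le; lra. }
  assert (Hsum := sumR_le _ _ N Hterm). rewrite sumR_scal in Hsum.
  assert (Hgeom := sumR_exp_geometric_lt D N ltac:(lra)).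
  assert (Hslope := exp_one_sub_dickman_g'_le t He4). fold D in Hslope.
  assert (Hf : 0 < dickman_majorant t) by apply exp_pos.
  apply Rle_lt_trans with (/ INR N * (dickman_majorant t * sumR (fun i => exp (D / INR N) ^ (N - i)) N)).
  { apply Rmult_le_compat_l; [left; apply Rinv_0_lt_compat|]; lra. }
  apply Rlt_le_trans with (/ INR N * (dickman_majorant t * (exp (D + 1) * INR N / D))).
  { apply Rmult_lt_compat_l; [apply Rinv_0_lt_compat; lra|]. apply Rmult_lt_compat_l; lra. }
  replace (/ INR N * (dickman_majorant t * (exp (D + 1) * INR N / D)))
    with (dickman_majorant t * (exp (D + 1) / D)) by (field; lra).
  rewrite (Rmult_comm t). apply Rmult_le_compat_l; [lra|].
  apply Rle_div_l; lra.
Qed.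

Section DickmanMajorant.

Variable rho : R -> R.
Hypothesis Hrho : is_dickman rho.

Lemma dickman_le_majorant_base (s : R) :
  dickman_t0 - 1 <= s <= dickman_t0 -> rho s <= dickman_majorant s.
Proof.
  unfold dickman_t0. intros Hs. pose proof five_le_exp4.
  apply Rle_trans with 1; [apply dickman_le_1; auto; lra|].
  apply one_le_exp. unfold dickman_t0.
  pose proof (dickman_g_antitone s (exp 4 + 1) ltac:(lra)). lra.
Qed.

Lemma dickman_le_majorant_grid (t : R) (N : nat) :
  dickman_t0 <= t -> ln t + ln (ln t) + 1 <= INR N ->
  forall (n : nat) (s : R), dickman_t0 - 1 <= s <= dickman_t0 + INR n / INR N -> s <= t ->
  rho s <= dickman_majorant s.
Proof.
  intros Ht HN. assert (He4 : exp 4 <= t) by (unfold dickman_t0 in Ht; lra).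
  destruct (ln_bounds_of_exp4_le t He4) as [Hl Hll]. assert (HNp : 0 < INR N) by lra.
  induction n as [|n IH]; intros s Hs Hst.
  { apply dickman_le_majorant_base. unfold Rdiv in Hs. simpl in Hs. lra. }
  destruct (Rle_or_lt s (dickman_t0 + INR n / INR N)) as [Hsn|Hsn]; [apply IH; lra|].
  assert (Hn0 : 0 <= INR n / INR N) by (apply Rdiv_le_0_compat; [apply pos_INR | lra]).
  assert (HsT : dickman_t0 <= s) by lra.
  assert (Hs1 : 1 < s) by (unfold dickman_t0 in HsT; pose proof five_le_exp4; lra).
  assert (HsN : ln s + ln (ln s) + 1 <= INR N).
  { assert (exp 4 <= s) by (unfold dickman_t0 in HsT; lra).
    assert (Hls : ln s <= ln t) by (apply ln_le; pose proof (exp_pos 4); lra).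
    assert (ln (ln s) <= ln (ln t)) by (apply ln_le; [destruct (ln_bounds_of_exp4_le s); lra | exact Hls]).
    lra. }
  assert (Hgrid : forall i, (i < N)%nat ->
    rho (s - 1 + INR i / INR N) <= dickman_majorant (s - 1 + INR i / INR N)).
  { intros i Hi. assert (HiN : INR i + 1 <= INR N) by (rewrite <- S_INR; apply le_INR; lia).
    assert (0 <= INR i / INR N <= 1 - / INR N).
    { split; [apply Rdiv_le_0_compat; [apply pos_INR | lra]|].
      apply Rle_div_l; [lra|]. rewrite Rmult_minus_distr_r, Rinv_l by lra. lra. }
    assert (INR (S n) / INR N = INR n / INR N + / INR N) by (rewrite S_INR; field; lra).
    apply IH; lra. }
  assert (Hlt : s * rho s < s * dickman_majorant s).
  { eapply Rle_lt_trans; [apply (dickman_le_riemann_sum rho Hrho s N); [lra | apply INR_lt; simpl; lra]|].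
    eapply Rle_lt_trans; [|apply (dickman_majorant_riemann_sum_lt s N HsT HsN)].
    apply Rmult_le_compat_l; [left; apply Rinv_0_lt_compat; lra|]. apply sumR_le, Hgrid. }
  apply Rlt_le, (Rmult_lt_reg_l s); [lra | exact Hlt].
Qed.

Lemma dickman_le_majorant (t : R) : dickman_t0 - 1 <= t -> rho t <= dickman_majorant t.
Proof.
  intro Ht. destruct (Rle_or_lt t dickman_t0) as [HtT|HtT]; [apply dickman_le_majorant_base; lra|].
  destruct (INR_unbounded (ln t + ln (ln t) + 1)) as [N HN].
  destruct (INR_unbounded ((t - dickman_t0) * INR N)) as [n Hn].
  apply (dickman_le_majorant_grid t N ltac:(lra) ltac:(lra) n); [|lra].
  assert (HNp : 0 < INR N).
  { destruct (ln_bounds_of_exp4_le t ltac:(unfold dickman_t0 in HtT; lra)). lra. }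
  assert (t - dickman_t0 <= INR n / INR N) by (apply Rle_div_r; lra).
  lra.
Qed.

End DickmanMajorant.

Module Sieve.
From mathcomp Require Import ssreflect ssrfun ssrbool eqtype ssrnat seq div prime binomial bigop.
From mathcomp Require Import fintype zify.

Definition sum_seq (s : seq nat) (f : nat -> R) : R := foldr (fun x acc => f x + acc) 0 s.

Lemma sum_seq_cat s1 s2 f : sum_seq (s1 ++ s2) f = sum_seq s1 f + sum_seq s2 f.
Proof. elim: s1 => [|x s IH] /=; [lra | rewrite IH; lra]. Qed.

Lemma sum_seq_ext s f g : (forall x, x \in s -> f x = g x) -> sum_seq s f = sum_seq s g.
Proof.
  elim: s => [|x s IH] H //=. rewrite H ?mem_head // IH // => y Hy.
  by apply: H; rewrite in_cons Hy orbT.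
Qed.

Lemma sum_seq_le s f g : (forall x, x \in s -> f x <= g x) -> sum_seq s f <= sum_seq s g.
Proof.
  elim: s => [|x s IH] H /=; first lra.
  apply: Rplus_le_compat; first by apply: H; rewrite mem_head.
  by apply: IH => y Hy; apply: H; rewrite in_cons Hy orbT.
Qed.

Lemma sum_seq_0 s : sum_seq s (fun _ => 0) = 0.
Proof. elim: s => //= x s ->; lra. Qed.

Lemma sum_seq_ge0 s f : (forall x, x \in s -> 0 <= f x) -> 0 <= sum_seq s f.
Proof. by move=> H; rewrite -(sum_seq_0 s); apply: sum_seq_le. Qed.

Lemma sum_seq_scal s c f : sum_seq s (fun x => c * f x) = c * sum_seq s f.
Proof. elim: s => [|x s IH] /=; [lra | rewrite IH; lra]. Qed.

Lemma sum_seq_add s f g : sum_seq s (fun x => f x + g x) = sum_seq s f + sum_seq s g.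
Proof. elim: s => [|x s IH] /=; [lra | rewrite IH; lra]. Qed.

Lemma sum_seq_sub s f g : sum_seq s (fun x => f x - g x) = sum_seq s f - sum_seq s g.
Proof. elim: s => [|x s IH] /=; [lra | rewrite IH; lra]. Qed.

Lemma sum_seq_filter (P : pred nat) s f :
  sum_seq (filter P s) f = sum_seq s (fun x => if P x then f x else 0).
Proof. elim: s => [|x s IH] //=. case: (P x) => /=; rewrite IH; lra. Qed.

Lemma sum_seq_indicator s x c : uniq s -> x \in s ->
  sum_seq s (fun p => if p == x then c else 0) = c.
Proof.
  elim: s => [|y s IH] //= /andP [Hy Hu]. rewrite in_cons => /orP [/eqP Exy|Hx].
  - subst x. rewrite eqxx (sum_seq_ext _ _ (fun _ => 0)) ?sum_seq_0; first lra.
    move=> z Hz. case: (z =P y) => [E|//]. by subst z; rewrite Hz in Hy.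
  - rewrite IH //. case: (y =P x) => [E|_]; last lra. by subst y; rewrite Hx in Hy.
Qed.

Lemma iota1S n : iota 1 n.+1 = iota 1 n ++ [:: n.+1].
Proof. by rewrite -[n.+1]addn1 iotaD addnC. Qed.

Lemma prime_INR_ge2 p : prime p -> 2 <= INR p.
Proof. move=> Hp. apply: (le_INR 2). apply/leP. exact: prime_gt1. Qed.

Lemma ln_prime_ge0 p : prime p -> 0 <= ln (INR p).
Proof. move=> Hp. rewrite -ln_1. apply: ln_le; first lra. have := prime_INR_ge2 p Hp. lra. Qed.

Lemma INR_expn p k : INR (p ^ k)%N = INR p ^ k.
Proof. elim: k => [|k IH] //. by rewrite expnS mult_INR IH. Qed.

Lemma INR_divn_le a b : (0 < b)%N -> INR (a %/ b) <= INR a / INR b.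
Proof.
  move=> Hb. have Hbp : 0 < INR b by apply: lt_0_INR; apply/ltP.
  have : INR (a %/ b * b) <= INR a by apply: le_INR; apply/leP; exact: leq_divM.
  rewrite mult_INR => H. apply/Rle_div_r; lra.
Qed.

Lemma INR_divn_ge a b : (0 < b)%N -> INR a / INR b - 1 <= INR (a %/ b).
Proof.
  move=> Hb. have Hbp : 0 < INR b by apply: lt_0_INR; apply/ltP.
  have : INR a <= INR ((a %/ b).+1 * b) by apply: le_INR; apply/leP; apply: ltnW; exact: ltn_ceil.
  rewrite mult_INR S_INR => H.
  have : INR a / INR b <= INR (a %/ b) + 1 by apply/Rle_div_l; lra.
  lra.
Qed.

Definition primes_upto (n : nat) : seq nat := filter prime (iota 1 n).

Definition sum_primes (f : nat -> R) (n : nat) : R := sum_seq (primes_upto n) f.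

Lemma primes_upto_add a b : primes_upto (a + b) = primes_upto a ++ filter prime (iota a.+1 b).
Proof. by rewrite /primes_upto iotaD filter_cat add1n. Qed.

Lemma mem_primes_upto p n : (p \in primes_upto n) = prime p && (p <= n)%N.
Proof.
  rewrite /primes_upto mem_filter mem_iota. case Hp: (prime p) => //=.
  by rewrite add1n ltnS (prime_gt0 Hp).
Qed.

Lemma uniq_primes_upto n : uniq (primes_upto n).
Proof. by rewrite filter_uniq // iota_uniq. Qed.

(** * Chebyshev and Mertens estimates *)

Lemma ln_eq_sum_logn N m : (0 < m)%N -> (m <= N)%N ->
  ln (INR m) = sum_primes (fun p => INR (logn p m) * ln (INR p)) N.
Proof.
  elim: m {-2}m (leqnn m) => [|M IH] m Hm Hm0 HmN; first by move: Hm Hm0; rewrite leqn0 => /eqP ->.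
  case: (ltnP 1 m) => H1; last first.
  { have -> : m = 1%N by lia.
    rewrite ln_1 /sum_primes (sum_seq_ext _ _ (fun _ => 0)) ?sum_seq_0 // => x _.
    rewrite logn1 /=. lra. }
  have Hp := pdiv_prime H1. set p := pdiv m in Hp *.
  set m' := m %/ p. have Hp1 := prime_gt1 Hp.
  have Hmm : m = (p * m')%N by rewrite /m' mulnC divnK // pdiv_dvd.
  have Hm'0 : (0 < m')%N by rewrite /m' divn_gt0 ?pdiv_leq // ltnW.
  have Hm'lt : (m' < m)%N by rewrite /m' ltn_Pdiv.
  rewrite {1}Hmm mult_INR ln_mult; try by apply: lt_0_INR; apply/ltP; lia.
  rewrite (IH m') ?(leq_trans Hm'lt) //; try lia.
  rewrite /sum_primes -(sum_seq_indicator (primes_upto N) p (ln (INR p))); last first.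
  - rewrite mem_primes_upto Hp /=. apply: leq_trans HmN. exact: pdiv_leq.
  - exact: uniq_primes_upto.
  rewrite -sum_seq_add. apply: sum_seq_ext => x. rewrite mem_primes_upto => /andP [Hx _].
  rewrite Hmm lognM // ?prime_gt0 // (logn_prime x Hp) plus_INR.
  case: eqP => [->|_] /=; lra.
Qed.

Definition sum_ln (n : nat) : R := sum_seq (iota 1 n) (fun m => ln (INR m)).

Lemma sum_ln_S n : sum_ln n.+1 = sum_ln n + ln (INR n.+1).
Proof. by rewrite /sum_ln iota1S sum_seq_cat /=; lra. Qed.

Lemma sum_ln_eq_sum_logn_fact N n : (n <= N)%N ->
  sum_ln n = sum_primes (fun p => INR (logn p n`!) * ln (INR p)) N.
Proof.
  elim: n => [|n IH] Hn.
  - rewrite /sum_ln /= /sum_primes (sum_seq_ext _ _ (fun _ => 0)) ?sum_seq_0 // => x _.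
    rewrite logn1 /=. lra.
  - rewrite sum_ln_S IH ?(ltnW Hn) // (ln_eq_sum_logn N n.+1) // /sum_primes -sum_seq_add.
    apply: sum_seq_ext => x _. rewrite factS lognM ?fact_gt0 // plus_INR. lra.
Qed.

Lemma ln_succ_sub_le n : (0 < n)%N -> ln (INR n.+1) - ln (INR n) <= / INR n.
Proof.
  move=> Hn. have Hp : 0 < INR n by apply: lt_0_INR; apply/ltP.
  rewrite S_INR -ln_div; try lra.
  replace ((INR n + 1) / INR n) with (1 + / INR n) by (field; lra).
  have := ln_le_sub1 (1 + / INR n). have := Rinv_0_lt_compat _ Hp. lra.
Qed.

Lemma sum_ln_le n : sum_ln n <= INR n * ln (INR n).
Proof.
  elim: n => [|n IH]; first by rewrite /sum_ln /=; lra.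
  rewrite sum_ln_S. case: n IH => [|n] IH; first by rewrite /= ln_1 in IH *; lra.
  have Hl : ln (INR n.+1) <= ln (INR n.+2) by apply: ln_le; [apply: lt_0_INR | apply: le_INR]; lia.
  have -> : INR n.+2 * ln (INR n.+2) = INR n.+1 * ln (INR n.+2) + ln (INR n.+2)
    by rewrite (S_INR n.+1); ring.
  have := pos_INR n.+1. nra.
Qed.

Lemma sum_ln_ge n : INR n * ln (INR n) - INR n <= sum_ln n.
Proof.
  elim: n => [|n IH]; first by rewrite /sum_ln /=; lra.
  rewrite sum_ln_S. case: n IH => [|n] IH; first by rewrite /= ln_1 in IH *; lra.
  have Hd := ln_succ_sub_le n.+1 isT.
  have Hp : 0 < INR n.+1 by apply: lt_0_INR; lia.
  have : INR n.+1 * (ln (INR n.+2) - ln (INR n.+1)) <= 1.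
  { apply: (Rle_trans _ (INR n.+1 * / INR n.+1)); first by apply: Rmult_le_compat_l; lra.
    rewrite Rinv_r; lra. }
  have -> : INR n.+2 * ln (INR n.+2) - INR n.+2
            = INR n.+1 * ln (INR n.+2) + ln (INR n.+2) - INR n.+1 - 1
    by rewrite (S_INR n.+1); ring.
  nra.
Qed.

Lemma logn_fact_le p n : prime p -> INR (logn p n`!) <= INR n / (INR p - 1).
Proof.
  move=> Hp. rewrite logn_fact //.
  have Hp1 : 1 < INR p by have := prime_INR_ge2 p Hp; lra.
  suff H : forall K, INR (\sum_(1 <= k < K.+1) n %/ p ^ k)
                     <= INR n / (INR p - 1) - INR n / ((INR p - 1) * INR p ^ K).
  { have := H n. have : 0 <= INR n / ((INR p - 1) * INR p ^ n).
    { apply: Rdiv_le_0_compat; first exact: pos_INR.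
      apply: Rmult_lt_0_compat; [lra | apply: pow_lt; lra]. }
    lra. }
  elim => [|K IH]; first by rewrite big_geq //= Rmult_1_r; lra.
  rewrite big_nat_recr //= plus_INR.
  have Hpk : (0 < p ^ K.+1)%N by rewrite expn_gt0 prime_gt0.
  have := INR_divn_le n _ Hpk. rewrite INR_expn => H1.
  have Hq : 0 < INR p ^ K by apply: pow_lt; lra.
  replace (INR n / (INR p - 1) - INR n / ((INR p - 1) * (INR p * INR p ^ K))) with
    (INR n / (INR p - 1) - INR n / ((INR p - 1) * INR p ^ K) + INR n / (INR p ^ K.+1));
    first lra.
  simpl. field. repeat split; lra.
Qed.

Lemma logn_fact_ge p n : prime p -> INR n / INR p - 1 <= INR (logn p n`!).
Proof.
  move=> Hp. rewrite logn_fact //. case: n => [|n].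
  - rewrite big_geq //= /Rdiv Rmult_0_l. lra.
  - rewrite big_ltn // plus_INR expn1.
    have := INR_divn_ge n.+1 p (prime_gt0 Hp).
    have := pos_INR (\sum_(2 <= i < n.+2) n.+1 %/ p ^ i). lra.
Qed.

Lemma binomial_add_le_pow2 n i j : (i <= n)%N -> (j <= n)%N -> i <> j ->
  ('C(n, i) + 'C(n, j) <= 2 ^ n)%N.
Proof.
  move=> Hi Hj Hij.
  have -> : (2 ^ n = \sum_(k < n.+1) 'C(n, k))%N.
  { rewrite -(addn1 1) expnDn. apply: eq_bigr => k _. by rewrite !exp1n !muln1. }
  rewrite (bigD1 (Ordinal (n:=n.+1) (m:=i) Hi)) //= (bigD1 (Ordinal (n:=n.+1) (m:=j) Hj)) //=.
  - rewrite addnA. exact: leq_addr.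
  - apply/eqP => H. apply: Hij. by case: H.
Qed.

(* The two middle coefficients of row [2m+1] are equal and sum to at most [2^(2m+1)]. *)
Lemma binomial_middle_le m : ('C(m.*2.+1, m) <= 4 ^ m)%N.
Proof.
  have E : 'C(m.*2.+1, m.+1) = 'C(m.*2.+1, m).
  { rewrite -(bin_sub (n:=m.*2.+1) (m:=m)); last lia. f_equal. lia. }
  have := binomial_add_le_pow2 m.*2.+1 m m.+1 ltac:(lia) ltac:(lia) ltac:(lia).
  have -> : (2 ^ m.*2.+1 = 2 * 4 ^ m)%N by rewrite expnS -mul2n expnM.
  rewrite E. lia.
Qed.

Lemma logn_fact_small p m : prime p -> (m < p)%N -> logn p m`! = 0%N.
Proof.
  move=> Hp Hm. rewrite logn_fact // big_nat_cond big1 // => k /andP [/andP [Hk _] _].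
  apply: divn_small. apply: leq_trans Hm _. case: k Hk => [//|k] _.
  rewrite expnS. apply: leq_pmulr. by rewrite expn_gt0 prime_gt0.
Qed.

Lemma prime_dvd_binomial_middle m p : prime p -> (m.+1 < p)%N -> (p <= m.*2.+1)%N ->
  (0 < logn p 'C(m.*2.+1, m))%N.
Proof.
  move=> Hp H1 H2.
  have L := congr1 (logn p) (bin_fact (n:=m.*2.+1) (m:=m) ltac:(lia)).
  rewrite (_ : (m.*2.+1 - m = m.+1)%N) in L; last lia.
  rewrite lognM ?bin_gt0 ?muln_gt0 ?fact_gt0 // in L; last lia.
  rewrite lognM ?fact_gt0 // in L.
  rewrite (logn_fact_small p m) ?(logn_fact_small p m.+1) // in L; try lia.
  rewrite !addn0 in L. rewrite L logn_fact // big_ltn // expn1.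
  by rewrite ltn_addr // divn_gt0 ?prime_gt0.
Qed.

Definition chebyshev_theta (n : nat) : R := sum_primes (fun p => ln (INR p)) n.

Lemma chebyshev_theta_S n :
  chebyshev_theta n.+1 = chebyshev_theta n + (if prime n.+1 then ln (INR n.+1) else 0).
Proof.
  rewrite /chebyshev_theta /sum_primes -addn1 primes_upto_add sum_seq_cat addn1 /=.
  case: (prime n.+1) => /=; lra.
Qed.

Lemma sum_logn_ge0 s (F : nat -> nat) :
  0 <= sum_seq (filter prime s) (fun p => INR (F p) * ln (INR p)).
Proof.
  apply: sum_seq_ge0 => x. rewrite mem_filter => /andP [Hx _].
  apply: Rmult_le_pos; [exact: pos_INR | exact: ln_prime_ge0].
Qed.

(* Every prime in (m+1, 2m+1] divides C(2m+1, m) <= 4^m. *)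
Lemma chebyshev_theta_double m :
  chebyshev_theta m.*2.+1 <= chebyshev_theta m.+1 + INR m * ln 4.
Proof.
  set C := 'C(m.*2.+1, m). have HC : (0 < C)%N by rewrite bin_gt0; lia.
  have Hle : ln (INR C) <= INR m * ln 4.
  { rewrite -ln_pow; last lra. apply: ln_le; first by apply: lt_0_INR; apply/ltP.
    replace 4 with (INR 4) by (simpl; lra). rewrite -INR_expn.
    apply: le_INR; apply/leP; exact: binomial_middle_le. }
  rewrite (ln_eq_sum_logn (m.+1 + m + C) C) // in Hle; last lia.
  rewrite /sum_primes !primes_upto_add !sum_seq_cat in Hle.
  have := sum_logn_ge0 (iota 1 m.+1) (fun p => logn p C).
  have := sum_logn_ge0 (iota (m.+1 + m).+1 C) (fun p => logn p C).
  have : sum_seq (filter prime (iota m.+2 m)) (fun p => ln (INR p)) <=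
         sum_seq (filter prime (iota m.+2 m)) (fun p => INR (logn p C) * ln (INR p)).
  { apply: sum_seq_le => x. rewrite mem_filter mem_iota => /andP [Hx /andP [Hx1 Hx2]].
    have : 1 <= INR (logn x C)
      by apply: (le_INR 1); apply/leP; apply: prime_dvd_binomial_middle; lia.
    have := ln_prime_ge0 x Hx. nra. }
  have -> : m.*2.+1 = (m.+1 + m)%N by lia.
  rewrite /chebyshev_theta /sum_primes primes_upto_add sum_seq_cat.
  rewrite /primes_upto in Hle *. lra.
Qed.

Lemma chebyshev_theta_le n : chebyshev_theta n <= INR n * ln 4.
Proof.
  have Hl4 : 0 < ln 4 by rewrite -ln_1; apply: ln_increasing; lra.
  elim/ltn_ind: n => n IH.
  case: (leqP n 2) => Hn2.
  { case: n IH Hn2 => [|[|[|//]]] _ _; rewrite /chebyshev_theta /sum_primes /=; try lra.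
    have : ln 2 <= ln 4 by apply: ln_le; lra.
    replace (1 + 1) with 2 by ring. lra. }
  case Ho: (odd n).
  - have Hn : n = (n./2).*2.+1 by rewrite -[n in LHS](odd_double_half n) Ho.
    have := chebyshev_theta_double n./2. have := IH (n./2).+1 ltac:(lia).
    rewrite -Hn. have -> : INR n = INR (n./2).+1 + INR n./2
      by rewrite -plus_INR; f_equal; lia.
    lra.
  - case: n IH Hn2 Ho => [//|n] IH Hn2 Ho.
    rewrite chebyshev_theta_S.
    have -> : prime n.+1 = false.
    { apply/negP => Hp. case: (even_prime Hp) => [|Hodd]; first lia. by rewrite Hodd in Ho. }
    have := IH n (leqnn _). rewrite S_INR. lra.
Qed.

Definition mertens_sum (n : nat) : R := sum_primes (fun p => ln (INR p) / INR p) n.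
Definition mertens_sum' (n : nat) : R := sum_primes (fun p => ln (INR p) / (INR p - 1)) n.

(* Legendre's formula turns [n ln n - n <= ln n! <= n ln n] into bounds on the two sums. *)
Lemma mertens_sum_le n : (0 < n)%N -> mertens_sum n <= ln (INR n) + ln 4.
Proof.
  move=> Hn. have Hnp : 0 < INR n by apply: lt_0_INR; apply/ltP.
  have H1 : INR n * mertens_sum n - chebyshev_theta n <= sum_ln n.
  { rewrite (sum_ln_eq_sum_logn_fact n n) // /mertens_sum /chebyshev_theta /sum_primes.
    rewrite -sum_seq_scal -sum_seq_sub. apply: sum_seq_le => x.
    rewrite mem_primes_upto => /andP [Hx _].
    have := logn_fact_ge x n Hx. have := ln_prime_ge0 x Hx. have := prime_INR_ge2 x Hx.
    move=> H2 H3 H4.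
    replace (INR n * (ln (INR x) / INR x) - ln (INR x))
      with ((INR n / INR x - 1) * ln (INR x)) by (field; lra).
    apply: Rmult_le_compat_r; lra. }
  have := sum_ln_le n. have := chebyshev_theta_le n. move=> H2 H3.
  apply: (Rmult_le_reg_l (INR n)); lra.
Qed.

Lemma mertens_sum'_ge n : (0 < n)%N -> ln (INR n) - 1 <= mertens_sum' n.
Proof.
  move=> Hn. have Hnp : 0 < INR n by apply: lt_0_INR; apply/ltP.
  have H1 : sum_ln n <= INR n * mertens_sum' n.
  { rewrite (sum_ln_eq_sum_logn_fact n n) // /mertens_sum' /sum_primes -sum_seq_scal.
    apply: sum_seq_le => x. rewrite mem_primes_upto => /andP [Hx _].
    have := logn_fact_le x n Hx. have := ln_prime_ge0 x Hx. have := prime_INR_ge2 x Hx.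
    move=> H2 H3 H4.
    replace (INR n * (ln (INR x) / (INR x - 1)))
      with ((INR n / (INR x - 1)) * ln (INR x)) by (field; lra).
    apply: Rmult_le_compat_r; lra. }
  have := sum_ln_ge n. move=> H2.
  apply: (Rmult_le_reg_l (INR n)); lra.
Qed.

Definition ln_div_pronic (d : nat) : R := ln (INR d) / (INR d * (INR d - 1)).

Lemma sum_ln_div_pronic_le n : (0 < n)%N ->
  sum_seq (iota 1 n) ln_div_pronic <= 2 - (ln (INR n) + 2) / INR n.
Proof.
  elim: n => [//|n IH] _. case: n IH => [|n] IH; first by rewrite /= /ln_div_pronic /= ln_1; lra.
  rewrite iota1S sum_seq_cat [sum_seq [:: _] _]/= Rplus_0_r. have H := IH isT.
  have Hp : 0 < INR n.+1 by apply: lt_0_INR; lia.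
  have Hd := ln_succ_sub_le n.+1 isT.
  rewrite [ln_div_pronic n.+2]/ln_div_pronic (S_INR n.+1) in Hd |- *.
  set a := INR n.+1 in Hp Hd H |- *.
  set L := ln a in Hd H |- *. set L' := ln (a + 1) in Hd |- *.
  replace (a + 1 - 1) with a by ring.
  have Ha : 1 <= a by apply: (le_INR 1); lia.
  have H2 : (a + 1) * (L' - L) <= 2.
  { have : (a + 1) * (L' - L) <= (a + 1) * / a by apply: Rmult_le_compat_l; lra.
    have : (a + 1) * / a <= 2 by apply/Rle_div_l; lra.
    lra. }
  have : 0 <= (2 - (a + 1) * (L' - L)) / ((a + 1) * a) by apply: Rdiv_le_0_compat; nra.
  have -> : (2 - (a + 1) * (L' - L)) / ((a + 1) * a)
            = (L + 2) / a - (L' / ((a + 1) * a) + (L' + 2) / (a + 1)) by field; lra.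
  lra.
Qed.

Lemma mertens_sum'_sub_le n : mertens_sum' n - mertens_sum n <= 2.
Proof.
  case: n => [|n]; first by rewrite /mertens_sum' /mertens_sum /sum_primes /primes_upto /=; lra.
  apply: (Rle_trans _ (sum_seq (iota 1 n.+1) ln_div_pronic)).
  - rewrite /mertens_sum' /mertens_sum /sum_primes -sum_seq_sub /primes_upto sum_seq_filter.
    apply: sum_seq_le => x. rewrite mem_iota => /andP [Hx1 _].
    case Hx: (prime x).
    + have := prime_INR_ge2 x Hx => H2. rewrite /ln_div_pronic. right. field. lra.
    + rewrite /ln_div_pronic. case: x Hx1 Hx => [//|[|x]] _ _.
      * rewrite ln_1 /Rdiv Rmult_0_l. lra.
      * have : 2 <= INR x.+2 by apply: (le_INR 2); lia.
        move=> H2. apply: Rdiv_le_0_compat; last nra.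
        rewrite -ln_1. apply: ln_le; lra.
  - have := sum_ln_div_pronic_le n.+1 isT.
    have : 1 <= INR n.+1 by apply: (le_INR 1); lia.
    move=> H1. have : 0 <= ln (INR n.+1) by rewrite -ln_1; apply: ln_le; lra.
    move=> H2. have : 0 <= (ln (INR n.+1) + 2) / INR n.+1 by apply: Rdiv_le_0_compat; lra.
    lra.
Qed.

Lemma ln4_le2 : ln 4 <= 2.
Proof.
  rewrite -(ln_exp 2). apply: ln_le; first lra.
  have := exp_ineq1_le 1. have := exp_plus 1 1. replace (1 + 1) with 2 by ring. nra.
Qed.

Lemma sum_inv_primes_ge a b : (0 < a)%N -> (a <= b)%N -> (2 <= b)%N ->
  (ln (INR b) - ln (INR a) - 5) / (2 * ln (INR b))
  <= sum_seq (filter prime (iota a.+1 (b - a))) (fun p => / INR p).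
Proof.
  move=> Ha Hab Hb. set mid := filter prime (iota a.+1 (b - a)).
  have Hbp : 0 < ln (INR b) by rewrite -ln_1; apply: ln_increasing; [lra | apply: (lt_INR 1); lia].
  have HM : ln (INR b) - ln (INR a) - 5 <= sum_seq mid (fun p => ln (INR p) / (INR p - 1)).
  { have := mertens_sum'_ge b ltac:(lia). have := mertens_sum'_sub_le a.
    have := mertens_sum_le a Ha. have := ln4_le2.
    rewrite /mertens_sum' /sum_primes (_ : b = a + (b - a))%N; last lia.
    rewrite primes_upto_add sum_seq_cat -/mid (_ : a + (b - a) = b)%N; last lia. lra. }
  apply: (Rle_trans _ (sum_seq mid (fun p => / (2 * ln (INR b)) * (ln (INR p) / (INR p - 1))))).
  - rewrite sum_seq_scal /Rdiv Rmult_comm. apply: Rmult_le_compat_l; last exact: HM.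
    left; apply: Rinv_0_lt_compat; lra.
  - apply: sum_seq_le => x. rewrite mem_filter mem_iota => /andP [Hx /andP [Hx1 Hx2]].
    have H2 := prime_INR_ge2 x Hx. have H3 := ln_prime_ge0 x Hx.
    have H4 : ln (INR x) <= ln (INR b) by apply: ln_le; [lra | apply: le_INR; lia].
    replace (/ (2 * ln (INR b)) * (ln (INR x) / (INR x - 1)))
      with ((ln (INR x) / ln (INR b)) * / (2 * (INR x - 1))) by (field; lra).
    apply: (Rle_trans _ (1 * / (2 * (INR x - 1)))).
    + apply: Rmult_le_compat_r; first by left; apply: Rinv_0_lt_compat; lra.
      apply/Rle_div_l; lra.
    + rewrite Rmult_1_l. apply: Rinv_le_contravar; lra.
Qed.

Lemma nat_floor_lt_iff x p : 0 <= x -> (nat_floor x < p)%N <-> x < INR p.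
Proof.
  move=> Hx. have [H1 H2] := nat_floor_spec x Hx. split => H.
  - have : INR (nat_floor x) + 1 <= INR p by rewrite -S_INR; apply: le_INR; apply/leP.
    lra.
  - apply/ltP. apply: INR_lt. lra.
Qed.

Lemma le_nat_floor_iff x p : 0 <= x -> (p <= nat_floor x)%N <-> INR p <= x.
Proof.
  move=> Hx. have := nat_floor_lt_iff x p Hx. rewrite ltnNge.
  case: (p <= nat_floor x)%N => /= H; split => // H'.
  - apply: Rnot_lt_le => Hlt. by have := proj2 H Hlt.
  - have := proj1 H isT. lra.
Qed.

Definition primes_between (X Y : R) : seq nat :=
  filter prime (iota (nat_floor X).+1 (nat_floor Y - nat_floor X)).

Lemma mem_primes_between X Y p : 0 <= X <= Y ->
  p \in primes_between X Y -> prime p /\ X < INR p <= Y.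
Proof.
  move=> [HX HXY]. have HY : 0 <= Y by lra.
  rewrite /primes_between mem_filter mem_iota => /andP [Hp /andP [H1 H2]].
  have HfXY : (nat_floor X <= nat_floor Y)%N.
  { apply/(le_nat_floor_iff _ _ HY). have := nat_floor_spec X HX. lra. }
  split => //. split; first exact/(nat_floor_lt_iff _ _ HX).
  apply/(le_nat_floor_iff _ _ HY). lia.
Qed.

Lemma uniq_primes_between X Y : uniq (primes_between X Y).
Proof. by rewrite filter_uniq // iota_uniq. Qed.

Lemma sum_inv_primes_between_ge X Y : 1 <= X <= Y -> 2 <= Y -> 6 <= ln Y - ln X ->
  (ln Y - ln X - 6) / (2 * ln Y) <= sum_seq (primes_between X Y) (fun p => / INR p).
Proof.
  move=> HXY HY H6.
  have [a1 a2] := nat_floor_spec X ltac:(lra). have [b1 b2] := nat_floor_spec Y ltac:(lra).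
  have HX0 : 0 <= X by lra. have HY0 : 0 <= Y by lra.
  have Ha : (0 < nat_floor X)%N by apply/(le_nat_floor_iff _ _ HX0) => /=; lra.
  have Hab : (nat_floor X <= nat_floor Y)%N by apply/(le_nat_floor_iff _ _ HY0); lra.
  have Hb : (2 <= nat_floor Y)%N by apply/(le_nat_floor_iff _ _ HY0) => /=; lra.
  apply: Rle_trans (sum_inv_primes_ge _ _ Ha Hab Hb).
  have Hap : 0 < INR (nat_floor X) by apply: (lt_INR 0); lia.
  have HlnY : 0 < ln Y by rewrite -ln_1; apply: ln_increasing; lra.
  have Hla : ln (INR (nat_floor X)) <= ln X by apply: ln_le.
  have Hlb : ln (INR (nat_floor Y)) <= ln Y by apply: ln_le; [apply: (lt_INR 0); lia | lra].
  have Hlb2 : ln Y - ln 2 <= ln (INR (nat_floor Y)).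
  { rewrite -ln_div; try lra. apply: ln_le; first lra. apply/Rle_div_l; lra. }
  have Hl2 : ln 2 <= 1.
  { rewrite -(ln_exp 1). apply: ln_le; first lra. have := exp_ineq1_le 1. lra. }
  have HlX : 0 <= ln X by rewrite -ln_1; apply: ln_le; lra.
  apply: (Rle_trans _ ((ln Y - ln X - 6) / (2 * ln (INR (nat_floor Y))))).
  - rewrite /Rdiv. apply: Rmult_le_compat_l; first lra. apply: Rinv_le_contravar; lra.
  - rewrite /Rdiv. apply: Rmult_le_compat_r; last lra.
    left; apply: Rinv_0_lt_compat; lra.
Qed.

(** * Products of primes from disjoint intervals *)

Lemma uniq_allpairs_dep (s : seq nat) (t : nat -> seq nat) (f : nat -> nat -> nat) :
  uniq s -> (forall x, x \in s -> uniq (t x)) ->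
  (forall x y x' y', x \in s -> y \in t x -> x' \in s -> y' \in t x' ->
     f x y = f x' y' -> x = x' /\ y = y') ->
  uniq [seq f x y | x <- s, y <- t x].
Proof.
  elim: s => [//|x s IH] /= /andP [Hx Hs] Ht Hinj.
  rewrite cat_uniq. apply/and3P; split.
  - rewrite map_inj_in_uniq; first by apply: Ht; rewrite mem_head.
    move=> y y' Hy Hy' E. by case: (Hinj x y x y' (mem_head _ _) Hy (mem_head _ _) Hy' E).
  - apply/hasP => [[z /allpairsPdep [x' [y' [Hx' Hy' ->]]] /mapP [y Hy Ez]]].
    have Hx's : x' \in x :: s by rewrite in_cons Hx' orbT.
    have [Exx _] := Hinj x y x' y' (mem_head _ _) Hy Hx's Hy' (esym Ez).
    by subst x'; rewrite Hx' in Hx.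
  - apply: IH => //; first by move=> z Hz; apply: Ht; rewrite in_cons Hz orbT.
    move=> a b a' b' Ha Hb Ha' Hb'. by apply: Hinj; rewrite // in_cons ?Ha ?Ha' orbT.
Qed.

Lemma sum_seq_allpairs (s : seq nat) (t : nat -> seq nat) (f : nat -> nat -> nat) g :
  sum_seq [seq f x y | x <- s, y <- t x] g
  = sum_seq s (fun x => sum_seq (t x) (fun y => g (f x y))).
Proof.
  elim: s => [//|x s IH] /=. rewrite sum_seq_cat IH. f_equal.
  by elim: (t x) => //= y l ->.
Qed.

Lemma size_allpairs_dep (s : seq nat) (t : nat -> seq nat) (f : nat -> nat -> nat) :
  INR (size [seq f x y | x <- s, y <- t x]) = sum_seq s (fun x => INR (size (t x))).
Proof. elim: s => [//|x s IH] /=. by rewrite size_cat size_map plus_INR IH. Qed.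

Fixpoint prime_products (Is : seq (R * R)) : seq nat :=
  match Is with
  | [::] => [:: 1%N]
  | (X, Y) :: Is' => [seq (p * k)%N | k <- prime_products Is', p <- primes_between X Y]
  end.

Fixpoint intervals_le (Is : seq (R * R)) (b : R) : Prop :=
  if Is is (X, Y) :: Is' then Y <= b /\ intervals_le Is' b else True.
Fixpoint intervals_ge (Is : seq (R * R)) (a : R) : Prop :=
  if Is is (X, Y) :: Is' then a <= X /\ intervals_ge Is' a else True.
Fixpoint descending_intervals (Is : seq (R * R)) : Prop :=
  if Is is (X, Y) :: Is'
  then 1 <= X <= Y /\ intervals_le Is' X /\ descending_intervals Is' else True.
Fixpoint in_intervals (Is : seq (R * R)) (r : R) : Prop :=
  if Is is (X, Y) :: Is' then X < r <= Y \/ in_intervals Is' r else False.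
Fixpoint prod_lower (Is : seq (R * R)) : R :=
  if Is is (X, Y) :: Is' then X * prod_lower Is' else 1.
Fixpoint prod_upper (Is : seq (R * R)) : R :=
  if Is is (X, Y) :: Is' then Y * prod_upper Is' else 1.
Fixpoint prod_sum_inv_primes (Is : seq (R * R)) : R :=
  if Is is (X, Y) :: Is'
  then sum_seq (primes_between X Y) (fun p => / INR p) * prod_sum_inv_primes Is' else 1.

Lemma in_intervals_le Is b r : in_intervals Is r -> intervals_le Is b -> r <= b.
Proof. elim: Is => [//|[X Y] Is IH] /= [H|H] [H1 H2]; [lra | auto]. Qed.

Lemma in_intervals_gt Is a r : in_intervals Is r -> intervals_ge Is a -> a < r.
Proof. elim: Is => [//|[X Y] Is IH] /= [H|H] [H1 H2]; [lra | auto]. Qed.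

Lemma prod_lower_ge1 Is : descending_intervals Is -> 1 <= prod_lower Is.
Proof. elim: Is => [|[X Y] Is IH] /=; first lra. move=> [H1 [_ H]]. have := IH H. nra. Qed.

Lemma prime_products_spec Is : descending_intervals Is -> forall k, k \in prime_products Is ->
  [/\ (0 < k)%N, prod_lower Is <= INR k <= prod_upper Is &
      forall r, prime r -> (r %| k)%N -> in_intervals Is (INR r)].
Proof.
  elim: Is => [|[X Y] Is IH] /=.
  - move=> _ k. rewrite inE => /eqP ->. split => //=; first lra.
    move=> r Hr /dvdn_leq -/(_ isT). have := prime_gt1 Hr. lia.
  - move=> [HXY [_ Hd]] n /allpairsPdep [k [p [Hk Hp ->]]].
    have [Pp [Pp1 Pp2]] := mem_primes_between X Y p ltac:(lra) Hp.
    have [Hk0 [Hk1 Hk2] Hkr] := IH Hd k Hk. have Hl1 := prod_lower_ge1 Is Hd.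
    split; first by rewrite muln_gt0 prime_gt0.
    + rewrite mult_INR. split; nra.
    + move=> r Hr. rewrite Euclid_dvdM // => /orP [|Hrk]; last by right; apply: Hkr.
      rewrite dvdn_prime2 // => /eqP ->. by left.
Qed.

(* Distinct interval choices give distinct products: the largest prime factor is read
   off from the top interval. *)
Lemma uniq_prime_products Is : descending_intervals Is -> uniq (prime_products Is).
Proof.
  elim: Is => [//|[X Y] Is IH] /= [HXY [Hb Hd]].
  apply: uniq_allpairs_dep; [exact: IH | move=> *; exact: uniq_primes_between|].
  move=> k p k' p' Hk Hp Hk' Hp' E.
  have [Pp _] := mem_primes_between X Y p ltac:(lra) Hp.
  have [Pp' [Pp1' _]] := mem_primes_between X Y p' ltac:(lra) Hp'.
  have [_ _ Hkr] := prime_products_spec Is Hd k Hk.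
  have [_ _ Hkr'] := prime_products_spec Is Hd k' Hk'.
  have Hpp : p = p'.
  { have : (p %| p' * k')%N by rewrite -E dvdn_mulr.
    rewrite Euclid_dvdM // => /orP [|H]; first by rewrite dvdn_prime2 // => /eqP.
    have := in_intervals_le _ _ _ (Hkr' p Pp H) Hb.
    have [_ [HpX _]] := mem_primes_between X Y p ltac:(lra) Hp. lra. }
  subst p'. split => //. apply/eqP. by rewrite -(eqn_pmul2l (prime_gt0 Pp)) E.
Qed.

Lemma sum_inv_prime_products Is : descending_intervals Is ->
  sum_seq (prime_products Is) (fun k => / INR k) = prod_sum_inv_primes Is.
Proof.
  elim: Is => [|[X Y] Is IH] /=; first lra.
  move=> [HXY [_ Hd]]. rewrite sum_seq_allpairs -(IH Hd) -sum_seq_scal.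
  apply: sum_seq_ext => k Hk. rewrite Rmult_comm -sum_seq_scal.
  apply: sum_seq_ext => p Hp.
  have [Pp _] := mem_primes_between X Y p ltac:(lra) Hp.
  have [Hk0 _ _] := prime_products_spec Is Hd k Hk.
  rewrite mult_INR Rinv_mult. ring.
Qed.

(** * Counting [m k] with [k] a product of primes from the intervals *)

Lemma count_good_eq q d :
  count_good q d = size (filter (fun n => dec_prop (good q d n)) (iota 1 (q - 1))).
Proof.
  rewrite /count_good. elim: (q - 1)%N 1%N => [//|n IH] m /=.
  case: (dec_prop (good q d m)) => /=; by rewrite IH.
Qed.

Lemma dec_prop_true (P : Prop) : dec_prop P = true <-> P.
Proof. rewrite /dec_prop. by case: (ClassicalEpsilon.excluded_middle_informative P). Qed.

Lemma prime_of_Zprime p : Znumtheory.prime (Z.of_nat p) -> prime p.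
Proof.
  move=> Hp. have Hp1 : (1 < p)%N by have := prime_ge_2 _ Hp; lia.
  apply/primeP. split => // e /dvdnP [c Hc].
  have Hz : (Z.of_nat e | Z.of_nat p)%Z by exists (Z.of_nat c); rewrite Hc; lia.
  case: (prime_divisors _ Hp _ Hz) => [|[|[|]]] H; apply/orP;
    first [lia | (left; apply/eqP; lia) | (right; apply/eqP; lia)].
Qed.

Lemma good_mul q d m k : (0 < m)%N -> (0 < k)%N -> INR m <= Rpower (INR q) (d / 10) ->
  (forall p, prime p -> (p %| k)%N -> Rpower (INR q) (d / 10) < INR p <= Rpower (INR q) d) ->
  good q d (m * k).
Proof.
  move=> Hm Hk Hmy Hpk. exists m, k. do 2 (split; first by apply/leP).
  do 2 (split => //). move=> p Hp [c Hc]. apply: Hpk; first exact: prime_of_Zprime.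
  by apply/dvdnP; exists c.
Qed.

Lemma count_good_ge_size q d (s : seq nat) : uniq s ->
  (forall n, n \in s -> (0 < n < q)%N /\ good q d n) -> (size s <= count_good q d)%N.
Proof.
  move=> Hs Hgood. rewrite count_good_eq. apply: uniq_leq_size => // n /Hgood [Hn Hg].
  rewrite mem_filter mem_iota. apply/andP; split; [exact/dec_prop_true | lia].
Qed.

Lemma coprime_of_prime_factors_gt k m (y : R) : (0 < m)%N -> INR m < y ->
  (forall r, prime r -> (r %| k)%N -> y < INR r) -> coprime k m.
Proof.
  move=> Hm Hmy Hk. rewrite /coprime. apply/negPn/negP => Hg.
  have Hg0 : (0 < gcdn k m)%N by rewrite gcdn_gt0 Hm orbT.
  have Hg1 : (1 < gcdn k m)%N by lia.
  have Hr := pdiv_prime Hg1. set r := pdiv (gcdn k m) in Hr.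
  have Hrm : (r <= m)%N by apply: dvdn_leq => //; apply: dvdn_trans (pdiv_dvd _) (dvdn_gcdr _ _).
  have := Hk r Hr (dvdn_trans (pdiv_dvd _) (dvdn_gcdl _ _)).
  have : INR r <= INR m by apply: le_INR; apply/leP.
  lra.
Qed.

Lemma mul_eq_of_coprime k m k' m' : (0 < k)%N -> coprime k m' -> coprime k' m ->
  (m * k = m' * k')%N -> k = k' /\ m = m'.
Proof.
  move=> Hk Hkm' Hk'm E.
  have Ekk : k = k'.
  { apply/eqP. rewrite eqn_dvd -(Gauss_dvdr _ Hkm') -(Gauss_dvdr _ Hk'm) -E.
    by rewrite dvdn_mull // E dvdn_mull. }
  subst k'. split => //. apply/eqP. by rewrite -(eqn_pmul2r Hk) E.
Qed.

Lemma sum_floor_div_le_count_good q d (A : seq nat) : uniq A ->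
  (forall k, k \in A -> [/\ (0 < k)%N,
     forall r, prime r -> (r %| k)%N -> Rpower (INR q) (d / 10) < INR r <= Rpower (INR q) d &
     INR q <= Rpower (INR q) (d / 10) * INR k]) ->
  sum_seq A (fun k => INR ((q - 1) %/ k)) <= INR (count_good q d).
Proof.
  move=> HA Hk. set y := Rpower (INR q) (d / 10) in Hk *.
  have Hmk : forall k m, k \in A -> m \in iota 1 ((q - 1) %/ k) ->
    [/\ (0 < m)%N, (m * k < q)%N & INR m < y].
  { move=> k m Hk1. rewrite mem_iota => /andP [Hm0 Hm1]. have [Hk0 _ Hqk] := Hk k Hk1.
    have Hlt : (m * k < q)%N.
    { have : (m * k <= (q - 1) %/ k * k)%N by rewrite leq_mul2r; apply/orP; right; lia.
      have := leq_divM (q - 1) k. lia. }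
    split => //. have Hkp : 0 < INR k by apply: lt_0_INR; apply/ltP.
    have : INR (m * k) < INR q by apply: lt_INR; apply/ltP.
    rewrite mult_INR. nra. }
  rewrite -(sum_seq_ext _ (fun k => INR (size (iota 1 ((q - 1) %/ k)))));
    last by move=> k _; rewrite size_iota.
  rewrite -(size_allpairs_dep _ _ (fun k m => m * k)%N). apply: le_INR; apply/leP.
  apply: count_good_ge_size.
  - apply: uniq_allpairs_dep => //; first by move=> *; exact: iota_uniq.
    move=> k m k' m' Hk1 Hm1 Hk1' Hm1'.
    have [Hk0 Hkr _] := Hk k Hk1. have [Hk0' Hkr' _] := Hk k' Hk1'.
    have [Hm0 _ Hmy] := Hmk k m Hk1 Hm1. have [Hm0' _ Hmy'] := Hmk k' m' Hk1' Hm1'.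
    apply: mul_eq_of_coprime => //; apply: coprime_of_prime_factors_gt; try eassumption.
    + by move=> r Hr Hrk; case: (Hkr r Hr Hrk).
    + by move=> r Hr Hrk; case: (Hkr' r Hr Hrk).
  - move=> n /allpairsPdep [k [m [Hk1 Hm1 ->]]].
    have [Hk0 Hkr _] := Hk k Hk1. have [Hm0 Hlt Hmy] := Hmk k m Hk1 Hm1.
    split; first by rewrite muln_gt0 Hm0 Hk0.
    apply: good_mul => //. rewrite /y in Hmy. lra.
Qed.

Fixpoint log_intervals (a h : R) (j : nat) : seq (R * R) :=
  if j is j'.+1 then (exp (a - h), exp a) :: log_intervals (a - h) h j' else [::].

Lemma log_intervals_le a h j b : 0 <= h -> exp a <= b -> intervals_le (log_intervals a h j) b.
Proof.
  elim: j a => [//|j IH] a Hh Hab /=. split => //.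
  apply: IH => //. apply: Rle_trans Hab. apply: exp_le. lra.
Qed.

Lemma log_intervals_ge a h j c : 0 <= h -> c <= exp (a - INR j * h) ->
  intervals_ge (log_intervals a h j) c.
Proof.
  elim: j a => [//|j IH] a Hh Hc /=. rewrite S_INR in Hc. split.
  - apply: Rle_trans Hc _. apply: exp_le. have := pos_INR j. nra.
  - apply: IH => //. by replace (a - h - INR j * h) with (a - (INR j + 1) * h) by ring.
Qed.

Lemma descending_log_intervals a h j : 0 <= h -> 0 <= a - INR j * h ->
  descending_intervals (log_intervals a h j).
Proof.
  elim: j a => [//|j IH] a Hh Ha /=. rewrite S_INR in Ha. have := pos_INR j => Hj.
  split; [|split].
  - split; [apply: one_le_exp; nra | apply: exp_le; lra].
  - apply: log_intervals_le; [lra | apply: exp_le; lra].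
  - apply: IH => //. nra.
Qed.

Lemma prod_lower_log_intervals a h j :
  prod_lower (log_intervals a h j) = exp (INR j * a - h * INR j * (INR j + 1) / 2).
Proof.
  elim: j a => [|j IH] a; first by rewrite /= -exp_0; f_equal; field.
  rewrite [LHS]/= IH -exp_plus S_INR. f_equal. field.
Qed.

Lemma prod_upper_log_intervals a h j :
  prod_upper (log_intervals a h j) = exp (INR j * a - h * INR j * (INR j - 1) / 2).
Proof.
  elim: j a => [|j IH] a; first by rewrite /= -exp_0; f_equal; field.
  rewrite [LHS]/= IH -exp_plus S_INR. f_equal. field.
Qed.

(* Mertens in each interval: each factor of the product is at least [h / (4 L)]. *)
Lemma prod_sum_inv_primes_log_intervals_ge a h j L : 12 <= h -> 0 <= a - INR j * h ->
  a <= L -> (h / (4 * L)) ^ j <= prod_sum_inv_primes (log_intervals a h j).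
Proof.
  elim: j a => [|j IH] a Hh Ha HaL /=; first lra.
  rewrite S_INR in Ha. have Hj := pos_INR j.
  have Hah : h <= a by nra.
  apply: Rmult_le_compat; [apply: Rdiv_le_0_compat; lra | apply: pow_le; apply: Rdiv_le_0_compat; lra | |].
  - have HY2 : 2 <= exp a.
    { apply: Rle_trans (exp_le _ _ Hah). have := exp_ineq1_le h. lra. }
    have := sum_inv_primes_between_ge (exp (a - h)) (exp a).
    rewrite !ln_exp. move=> /(_ ltac:(split; [apply: one_le_exp; nra | apply: exp_le; lra]) HY2 ltac:(lra)).
    apply: Rle_trans. rewrite (_ : a - (a - h) - 6 = h - 6); last ring.
    rewrite (_ : h / (4 * L) = h / 2 * / (2 * L)); last by field; lra.
    apply: Rmult_le_compat; [lra | left; apply: Rinv_0_lt_compat; lra | lra |].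
    apply: Rinv_le_contravar; lra.
  - apply: IH; nra.
Qed.

Lemma INR_divn_ge_half a b : (0 < b)%N -> 2 * INR b <= INR a -> INR a / 2 * / INR b <= INR (a %/ b).
Proof.
  move=> Hb Hab. have Hbp : 0 < INR b by apply: lt_0_INR; apply/ltP.
  apply: Rle_trans (INR_divn_ge a b Hb).
  have E : INR a / INR b - 1 - INR a / 2 * / INR b = (INR a - 2 * INR b) / (2 * INR b)
    by field; lra.
  have : 0 <= (INR a - 2 * INR b) / (2 * INR b) by apply: Rdiv_le_0_compat; lra.
  lra.
Qed.

(* The intervals lie in (q^(d/10), q^d], and the product [k] of one prime from each
   lies in [q^(1 - d/10), q/4], so every [m <= (q-1)/k] is below [q^(d/10)]. *)
Lemma count_good_ge (q j : nat) (d a h : R) : 2 <= INR q -> 0 < d -> 12 <= h ->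
  d * ln (INR q) / 10 <= a - INR j * h -> a <= d * ln (INR q) ->
  ln (INR q) - d * ln (INR q) / 10 <= INR j * a - h * INR j * (INR j + 1) / 2 ->
  INR j * a - h * INR j * (INR j - 1) / 2 <= ln (INR q) - ln 4 ->
  INR q / 4 * (h / (4 * (d * ln (INR q)))) ^ j <= INR (count_good q d).
Proof.
  move=> HqR Hd Hh Hlo Hhi Hprod_lo Hprod_hi.
  have Hq : (1 <= q)%N by apply/leP; apply: INR_le; simpl; lra.
  set L := d * ln (INR q) in Hlo Hhi Hprod_lo *.
  have HL : 0 < L by apply: Rmult_lt_0_compat => //; rewrite -ln_1; apply: ln_increasing; lra.
  have Hy : Rpower (INR q) (d / 10) = exp (L / 10) by rewrite /Rpower /L; f_equal; field.
  have Hz : Rpower (INR q) d = exp L by [].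
  set Is := log_intervals a h j.
  have Hdesc : descending_intervals Is by apply: descending_log_intervals; lra.
  have Hge : intervals_ge Is (exp (L / 10)) by apply: log_intervals_ge; [lra | apply: exp_le].
  have Hle : intervals_le Is (exp L) by apply: log_intervals_le; [lra | apply: exp_le].
  have Hkq : forall k, k \in prime_products Is -> 2 * INR k <= INR q - 1.
  { move=> k /(prime_products_spec Is Hdesc) [_ [_ Hk] _].
    rewrite prod_upper_log_intervals in Hk.
    have : exp (INR j * a - h * INR j * (INR j - 1) / 2) <= INR q / 4.
    { apply: Rle_trans (exp_le _ _ Hprod_hi) _. rewrite exp_plus exp_Ropp !exp_ln; lra. }
    lra. }
  apply: Rle_trans (sum_floor_div_le_count_good q d _ (uniq_prime_products Is Hdesc) _).
  - apply: (Rle_trans _ ((INR q - 1) / 2 * prod_sum_inv_primes Is)).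
    { apply: Rmult_le_compat; [lra | apply: pow_le; apply: Rdiv_le_0_compat; lra | lra |].
      apply: prod_sum_inv_primes_log_intervals_ge; lra. }
    rewrite -sum_inv_prime_products // -sum_seq_scal. apply: sum_seq_le => k Hk.
    have [Hk0 _ _] := prime_products_spec Is Hdesc k Hk.
    rewrite -(minus_INR q 1) /=; last exact/leP.
    apply: INR_divn_ge_half => //. rewrite minus_INR /=; [exact: Hkq | exact/leP].
  - move=> k Hk. have [Hk0 [Hk1 _] Hkr] := prime_products_spec Is Hdesc k Hk.
    split => //.
    + move=> r Hr Hrk. rewrite Hy Hz. split.
      * exact: in_intervals_gt (Hkr r Hr Hrk) Hge.
      * exact: in_intervals_le (Hkr r Hr Hrk) Hle.
    + rewrite Hy. apply: Rle_trans (Rmult_le_compat_l _ _ _ (Rlt_le _ _ (exp_pos _)) Hk1).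
      rewrite prod_lower_log_intervals -exp_plus -{1}(exp_ln (INR q)); last lra.
      apply: exp_le. lra.
Qed.
End Sieve.

(* For [u = 1 / delta]: [num_intervals u] intervals of logarithmic width
   [interval_width u * delta * ln q], the top one ending at [q^(interval_top u * delta)];
   [interval_top] makes the product of the lower endpoints exactly [q^(1 - delta/10)]. *)
Definition num_intervals (u : R) : nat :=
  S (nat_floor (u + (u + 2) / (20 * ln (u + 3)))).
Definition interval_width (u : R) : R := / (20 * INR (num_intervals u) * ln (u + 3)).
Definition interval_top (u : R) : R :=
  (u - / 10) / INR (num_intervals u)
  + interval_width u * (INR (num_intervals u) + 1) / 2.

Lemma ln_u3_bounds (u : R) : 2 <= u -> 1 <= ln (u + 3) <= u + 2.
Proof.
  intro Hu. split.
  - apply ln_ge_of_exp_le. pose proof exp_le_3. lra.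
  - pose proof (ln_le_sub1 (u + 3)). lra.
Qed.

Lemma num_intervals_bounds (u : R) : 2 <= u ->
  u + (u + 2) / (20 * ln (u + 3)) < INR (num_intervals u)
  <= u + (u + 2) / (20 * ln (u + 3)) + 1.
Proof.
  intro Hu. pose proof (ln_u3_bounds u Hu).
  assert (0 <= (u + 2) / (20 * ln (u + 3))) by (apply Rdiv_le_0_compat; lra).
  pose proof (nat_floor_spec (u + (u + 2) / (20 * ln (u + 3))) ltac:(lra)).
  unfold num_intervals. rewrite S_INR. lra.
Qed.

Lemma interval_params_spec (u : R) : 2 <= u ->
  let j := INR (num_intervals u) in let w := interval_width u in let b := interval_top u in
  0 < w /\ j * w <= / 20 /\ b <= 1 /\ / 10 <= b - j * w /\ 1 <= j <= 2 * u.
Proof.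
  intros Hu j w b. destruct (ln_u3_bounds u Hu) as [Hl Hle].
  set (l := ln (u + 3)) in *.
  destruct (num_intervals_bounds u Hu) as [Hj1 Hj2]. fold l j in Hj1, Hj2.
  assert (Hr0 : 0 <= (u + 2) / (20 * l)) by (apply Rdiv_le_0_compat; lra).
  assert (Hr1 : (u + 2) / (20 * l) <= (u + 2) / 20)
    by (apply Rmult_le_compat_l; [lra | apply Rinv_le_contravar; lra]).
  assert (Hw : w = / (20 * j * l)) by reflexivity.
  assert (Hwp : 0 < w) by (rewrite Hw; apply Rinv_0_lt_compat; nra).
  assert (Hjw : j * w = / (20 * l)) by (rewrite Hw; field; lra).
  assert (Hjw20 : j * w <= / 20) by (rewrite Hjw; apply Rinv_le_contravar; lra).
  assert (Hb : b = (u - / 10) / j + w * (j + 1) / 2) by reflexivity.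
  split; [exact Hwp | split; [exact Hjw20 | split; [|split; [|lra]]]].
  - assert (E : b = (u - / 10 + (j + 1) / (40 * l)) / j) by (rewrite Hb, Hw; field; lra).
    assert ((j + 1) / (40 * l) <= (u + 2) / (20 * l)).
    { replace ((j + 1) / (40 * l)) with ((j + 1) / 2 * / (20 * l)) by (field; lra).
      apply Rmult_le_compat_r; [left; apply Rinv_0_lt_compat|]; lra. }
    rewrite E. apply Rle_div_l; lra.
  - assert (3 / 10 <= (u - / 10) / j) by (apply (Rle_div_r (3 / 10)); lra).
    assert (0 <= w * (j + 1) / 2) by (apply Rdiv_le_0_compat; nra).
    rewrite Hb. lra.
Qed.

Lemma count_good_ge_interval_params (q : nat) (d : R) : 2 <= INR q -> 0 < d < / 2 ->
  2880 * (/ d) ^ 3 <= ln (INR q) ->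
  INR q / 4 * (interval_width (/ d) / 4) ^ num_intervals (/ d) <= INR (count_good q d).
Proof.
  intros Hq [Hd0 Hd1] Hlq. set (u := / d) in *.
  assert (Hu : 2 < u) by (unfold u; rewrite <- (Rinv_inv 2); apply Rinv_lt_contravar; lra).
  destruct (interval_params_spec u ltac:(lra)) as [Hw [Hjw [Hb1 [Hb2 [Hj1 Hj2u]]]]].
  destruct (ln_u3_bounds u ltac:(lra)) as [Hl1 Hl2].
  set (j := num_intervals u) in *. set (w := interval_width u) in *.
  set (b := interval_top u) in *. set (L := d * ln (INR q)).
  assert (HLu : L * u = ln (INR q)) by (unfold L, u; field; lra).
  assert (HL : 2880 * u ^ 2 <= L).
  { apply (Rmult_le_reg_r u); [lra|]. rewrite HLu. simpl in *. lra. }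
  assert (Hwj : w * (20 * INR j * ln (u + 3)) = 1) by (unfold w, interval_width; fold j; field; lra).
  assert (HLw : 12 <= L * w).
  { assert (INR j * ln (u + 3) <= (2 * u) * (2 * u)) by (apply Rmult_le_compat; lra).
    assert (36 * (20 * INR j * ln (u + 3)) <= L) by (simpl in HL; lra).
    assert (36 * (20 * INR j * ln (u + 3)) * w <= L * w) by (apply Rmult_le_compat_r; lra).
    lra. }
  assert (Hprod : INR j * b - w * INR j * (INR j + 1) / 2 = u - / 10)
    by (unfold b, interval_top; fold j w; field; lra).
  replace (w / 4) with (L * w / (4 * L)) by (field; nra).
  apply (Sieve.count_good_ge q j d (L * b) (L * w)); fold L; try lra.
  - replace (L * b - INR j * (L * w)) with (L * (b - INR j * w)) by field. nra.
  - nra.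
  - replace (INR j * (L * b) - L * w * INR j * (INR j + 1) / 2)
      with (L * (INR j * b - w * INR j * (INR j + 1) / 2)) by field.
    rewrite Hprod. nra.
  - replace (INR j * (L * b) - L * w * INR j * (INR j - 1) / 2)
      with (L * (INR j * b - w * INR j * (INR j + 1) / 2) + L * (INR j * w)) by field.
    rewrite Hprod. pose proof Sieve.ln4_le2. nra.
Qed.

Lemma num_intervals_excess (u : R) : dickman_t0 < u ->
  let r := (u + 2) / (20 * ln (u + 3)) + 1 in
  INR (num_intervals u) <= u + r /\ 1 <= r <= u /\ r * ln u <= 2 * u.
Proof.
  intros Hu r. unfold dickman_t0 in Hu. pose proof five_le_exp4.
  destruct (ln_u3_bounds u ltac:(lra)) as [Hl1 _].
  destruct (num_intervals_bounds u ltac:(lra)) as [_ Hj].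
  assert (Hlu : 0 < ln u <= ln (u + 3))
    by (split; [rewrite <- ln_1; apply ln_increasing | apply ln_le]; lra).
  assert (Hr0 : 0 <= (u + 2) / (20 * ln (u + 3))) by (apply Rdiv_le_0_compat; lra).
  assert ((u + 2) / (20 * ln (u + 3)) <= (u + 2) / 20)
    by (apply Rmult_le_compat_l; [lra | apply Rinv_le_contravar; lra]).
  assert ((u + 2) / (20 * ln (u + 3)) * ln u <= (u + 2) / 20).
  { replace ((u + 2) / (20 * ln (u + 3)) * ln u) with ((u + 2) / 20 * (ln u / ln (u + 3)))
      by (field; lra).
    rewrite <- (Rmult_1_r ((u + 2) / 20)) at 2.
    apply Rmult_le_compat_l; [lra | apply Rle_div_l; lra]. }
  pose proof (ln_le_sub1 u ltac:(lra)). unfold r. lra.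
Qed.

Lemma ln_80_num_intervals_le (u : R) : dickman_t0 < u ->
  let r := (u + 2) / (20 * ln (u + 3)) + 1 in
  ln (80 * INR (num_intervals u) * ln (u + 3)) <= ln u + ln (ln u) + 80 + r / u.
Proof.
  intros Hu r. unfold dickman_t0 in Hu. pose proof five_le_exp4.
  destruct (num_intervals_excess u ltac:(unfold dickman_t0; lra)) as [Hj [Hr _]]. fold r in Hj, Hr.
  destruct (num_intervals_bounds u ltac:(lra)) as [Hj1 _].
  destruct (ln_u3_bounds u ltac:(lra)) as [Hl1 _].
  destruct (ln_bounds_of_exp4_le u ltac:(lra)) as [Hlu Hllu].
  assert (0 <= (u + 2) / (20 * ln (u + 3))) by (apply Rdiv_le_0_compat; lra).
  assert (Hlnj : ln (INR (num_intervals u)) <= ln u + r / u)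
    by (apply Rle_trans with (ln (u + r)); [apply ln_le | apply ln_add_le]; lra).
  assert (Hlnl : ln (ln (u + 3)) <= ln (ln u) + 1).
  { assert (ln (u + 3) <= ln u + 1).
    { pose proof (ln_add_le u 3 ltac:(lra) ltac:(lra)).
      assert (3 / u <= 1) by (apply Rle_div_l; lra). lra. }
    apply Rle_trans with (ln (ln u + 1)); [apply ln_le; lra|].
    pose proof (ln_add_le (ln u) 1 ltac:(lra) ltac:(lra)).
    assert (1 / ln u <= 1) by (apply Rle_div_l; lra). lra. }
  pose proof (ln_le_sub1 80 ltac:(lra)).
  rewrite !ln_mult by (try apply Rmult_lt_0_compat; lra). lra.
Qed.

Lemma pow_interval_width_ge_large (u : R) : dickman_t0 < u ->
  exp (dickman_g u - 200 * u) <= (interval_width u / 4) ^ num_intervals u.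
Proof.
  intros Hu. pose proof Hu as Hu'. unfold dickman_t0 in Hu'. pose proof five_le_exp4.
  destruct (num_intervals_excess u Hu) as [Hj [Hr Hrl]].
  pose proof (ln_80_num_intervals_le u Hu) as HZ.
  set (r := (u + 2) / (20 * ln (u + 3)) + 1) in *.
  destruct (ln_u3_bounds u ltac:(lra)) as [Hl1 _].
  destruct (ln_bounds_of_exp4_le u ltac:(lra)) as [Hlu Hllu].
  destruct (num_intervals_bounds u ltac:(lra)) as [Hj1 _].
  assert (0 <= (u + 2) / (20 * ln (u + 3))) by (apply Rdiv_le_0_compat; lra).
  set (j := INR (num_intervals u)) in *.
  assert (Hw : interval_width u / 4 = / (80 * j * ln (u + 3)))
    by (unfold interval_width; fold j; field; lra).
  assert (HZ0 : 0 <= ln (80 * j * ln (u + 3)))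
    by (rewrite <- ln_1; apply ln_le; [lra | nra]).
  rewrite <- (exp_ln (interval_width u / 4)), exp_pow_INR by (rewrite Hw; apply Rinv_0_lt_compat; nra).
  apply exp_le. fold j. rewrite Hw, ln_Rinv by nra.
  assert (j * ln (80 * j * ln (u + 3))
          <= (u + r) * (ln u + ln (ln u) + 80 + r / u)) by (apply Rmult_le_compat; lra).
  assert (r * ln (ln u) <= 2 * u) by (pose proof (ln_le_sub1 (ln u) ltac:(lra)); nra).
  assert (r * (r / u) <= r) by (apply Rle_trans with (r * 1); [apply Rmult_le_compat_l; [lra | apply Rle_div_l; lra] | lra]).
  assert (u * (r / u) = r) by (field; lra).
  unfold dickman_g. nra.
Qed.

Lemma pow_interval_width_ge_small : exists c, 0 < c /\
  forall u, 2 < u <= dickman_t0 -> c <= (interval_width u / 4) ^ num_intervals u.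
Proof.
  pose proof five_le_exp4. assert (HT0 : 6 <= dickman_t0) by (unfold dickman_t0; lra).
  set (c := / (80 * (2 * dickman_t0) * (dickman_t0 + 2))).
  assert (Hc : 0 < c <= 1).
  { unfold c. split; [apply Rinv_0_lt_compat; nra|].
    rewrite <- Rinv_1. apply Rinv_le_contravar; nra. }
  destruct (INR_unbounded (2 * dickman_t0)) as [N HN].
  exists (c ^ N). split; [apply pow_lt; lra|]. intros u Hu.
  destruct (interval_params_spec u ltac:(lra)) as [_ [_ [_ [_ [Hj1 Hj2]]]]].
  destruct (ln_u3_bounds u ltac:(lra)) as [Hl1 Hl2].
  set (j := INR (num_intervals u)) in *.
  apply Rle_trans with (c ^ num_intervals u).
  { apply pow_le_pow_of_le1; [lra|]. apply INR_le. fold j. lra. }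
  apply pow_incr. split; [lra|].
  replace (interval_width u / 4) with (/ (80 * j * ln (u + 3)))
    by (unfold interval_width; fold j; field; lra).
  apply Rinv_le_contravar; [nra|].
  apply Rmult_le_compat; [nra | lra | apply Rmult_le_compat_l; lra | lra].
Qed.

Lemma dickman_le_pow_interval_width (rho : R -> R) : is_dickman rho ->
  exists C, 0 < C /\ forall u, 2 < u ->
  C * rho u * Rpower (exp 200) (- u) <= / 4 * (interval_width u / 4) ^ num_intervals u.
Proof.
  intros Hrho. destruct pow_interval_width_ge_small as [c [Hc Hsmall]].
  set (C := Rmin (c / 4) (exp (dickman_g dickman_t0) / 4)).
  assert (HC : 0 < C) by (apply Rmin_glb_lt; [lra | pose proof (exp_pos (dickman_g dickman_t0)); lra]).
  exists C. split; [exact HC|]. intros u Hu.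
  unfold Rpower. rewrite ln_exp.
  assert (Hr0 : 0 <= rho u) by (apply (dickman_nonneg rho Hrho); lra).
  assert (HE : 0 < exp (- u * 200)) by apply exp_pos.
  destruct (Rle_or_lt u dickman_t0) as [HuT|HuT].
  - assert (rho u <= 1) by (apply (dickman_le_1 rho Hrho); lra).
    assert (exp (- u * 200) <= 1) by (rewrite <- exp_0; apply exp_le; lra).
    assert (C <= c / 4) by apply Rmin_l.
    pose proof (Hsmall u ltac:(lra)).
    apply Rle_trans with (C * 1 * 1); [|lra].
    apply Rmult_le_compat; [nra | lra | apply Rmult_le_compat_l|]; lra.
  - assert (Hmaj : rho u <= dickman_majorant u)
      by (apply (dickman_le_majorant rho Hrho); unfold dickman_t0 in *; lra).
    pose proof (pow_interval_width_ge_large u HuT).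
    apply Rle_trans with (exp (dickman_g dickman_t0) / 4 * dickman_majorant u * exp (- u * 200)).
    { apply Rmult_le_compat_r; [lra|]. apply Rmult_le_compat; [lra | lra | apply Rmin_r | lra]. }
    unfold dickman_majorant.
    replace (exp (dickman_g dickman_t0) / 4 * exp (dickman_g u - dickman_g dickman_t0)
             * exp (- u * 200)) with (/ 4 * exp (dickman_g u - 200 * u)); [lra|].
    replace (dickman_g u - 200 * u)
      with (dickman_g dickman_t0 + (dickman_g u - dickman_g dickman_t0) + - u * 200) by ring.
    rewrite !exp_plus. field.
Qed.

Lemma cube_le_exp (t : R) : 737280 <= t -> 2880 * t ^ 3 <= exp t.
Proof.
  intro Ht. replace (exp t) with (exp (t / 4) ^ 4) by (rewrite exp_pow_INR; f_equal; simpl; field).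
  pose proof (exp_ineq1_le (t / 4)).
  apply Rle_trans with ((t / 4) ^ 4); [|apply pow_incr; lra].
  replace ((t / 4) ^ 4) with (t ^ 3 * (t / 256)) by (simpl; field).
  rewrite (Rmult_comm 2880). apply Rmult_le_compat_l; [apply pow_le|]; lra.
Qed.

(* [u lnlnln q / lnln q < 1] gives [u < lnln q], hence [2880 u^3 <= exp (lnln q) = ln q]. *)
Lemma ln_ge_cube_of_ratio_lt1 (x u : R) : exp (exp 737280) < x -> 0 < u ->
  u * (ln (ln (ln x)) / ln (ln x)) < 1 -> 2880 * u ^ 3 <= ln x.
Proof.
  intros Hx Hu Hratio. pose proof (exp_pos (exp 737280)).
  assert (Hl : exp 737280 < ln x)
    by (rewrite <- (ln_exp (exp 737280)); apply ln_increasing; lra).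
  pose proof (exp_pos 737280).
  assert (Hll : 737280 < ln (ln x)) by (rewrite <- (ln_exp 737280); apply ln_increasing; lra).
  assert (Hlll : 1 <= ln (ln (ln x))) by (apply ln_ge_of_exp_le; pose proof exp_le_3; lra).
  assert (Hul : u < ln (ln x)).
  { assert (u * ln (ln (ln x)) < ln (ln x)).
    { replace (u * ln (ln (ln x))) with (u * (ln (ln (ln x)) / ln (ln x)) * ln (ln x))
        by (field; lra). nra. }
    nra. }
  apply Rle_trans with (2880 * ln (ln x) ^ 3).
  - apply Rmult_le_compat_l; [lra | apply pow_incr; lra].
  - rewrite <- (exp_ln (ln x)) at 2 by lra. apply cube_le_exp. lra.
Qed.

Theorem corollary2p3 :
  forall rho : R -> R, is_dickman rho ->
  exists c0 C : R, 1 <= c0 /\ 0 < C /\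
  forall delta : nat -> R,
    (forall q, 0 < delta q < / 2) ->
    Un_cv (fun q => / delta q * (ln (ln (ln (INR q))) / ln (ln (INR q)))) 0 ->
    exists Q : nat, forall q : nat, (Q <= q)%nat -> prime (Z.of_nat q) ->
      C * rho (/ delta q) * Rpower c0 (- / delta q) * INR q
        <= INR (count_good q (delta q)).
Proof.
  intros rho Hrho. destruct (dickman_le_pow_interval_width rho Hrho) as [C [HC Hdens]].
  exists (exp 200), C. split; [apply one_le_exp; lra|]. split; [exact HC|].
  intros delta Hdelta Hcv. destruct (Hcv 1 Rlt_0_1) as [N HN].
  destruct (INR_unbounded (exp (exp 737280))) as [Q HQ].
  exists (Nat.max N Q). intros q Hq _.
  assert (HqQ : exp (exp 737280) < INR q)
    by (apply Rlt_le_trans with (INR Q); [exact HQ | apply le_INR; lia]).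
  destruct (Hdelta q) as [Hd0 Hd1].
  assert (Hu : 2 < / delta q) by (rewrite <- (Rinv_inv 2); apply Rinv_lt_contravar; lra).
  specialize (HN q ltac:(lia)). unfold R_dist in HN. rewrite Rminus_0_r in HN.
  apply Rle_trans with (INR q / 4 * (interval_width (/ delta q) / 4) ^ num_intervals (/ delta q)).
  - pose proof (pos_INR q). specialize (Hdens (/ delta q) Hu). nra.
  - apply count_good_ge_interval_params; [|lra|].
    { pose proof (exp_ineq1_le (exp 737280)). pose proof (exp_ineq1_le 737280). lra. }
    apply ln_ge_cube_of_ratio_lt1; [exact HqQ | lra |].
    apply Rle_lt_trans with (Rabs (/ delta q * (ln (ln (ln (INR q))) / ln (ln (INR q)))));
      [apply Rle_abs | exact HN].
Qed.
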